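(* For every second-order sentence $\psi$ there is an $\mathbf{ID}$ sentence $\phi$ such that for every suitable structure $M$, $M\models\psi$ if and only if $M\models_{\{\emptyset\}}\phi$.
   Context: Fix a first-order signature; structures have non-empty domains. An assignment on $M$ is a function from a finite set of variables into the domain of $M$; $s(a/x)$ is the assignment agreeing with $s$ except that it sends $x$ to $a$. A team $X$ of $M$ is a set of assignments on $M$ all with the same domain $dom(X)$. For $F:X\to M$ put $X(F/x)=\{s(F(s)/x): s\in X\}$, and put $X(M/x)=\{s(a/x): a\in M, s\in X\}$. Formulas of intuitionistic dependence logic $\mathbf{ID}$ are generated by $\phi::=\alpha\mid =\!\!(t)\mid \bot\mid \phi\wedge\phi\mid \phi\veebar\phi\mid \phi\to\phi\mid \forall x\phi\mid\exists x\phi$, where $\alpha$ is a first-order atomic formula and $t$ a term. Free variables are defined as usual ($Fv(=\!\!(t))$ = variables of $t$); a sentence has no free variables. Team semantics, for $X$ with $dom(X)\supseteq$ the free variables: $M\models_X\alpha$ iff $M\models_s\alpha$ (Tarski) for all $s\in X$; $M\models_X =\!\!(t)$ iff $s(t)=s'(t)$ for all $s,s'\in X$; $M\models_X\bot$ iff $X=\emptyset$; $M\models_X\phi\wedge\psi$ iff both hold; $M\models_X\phi\veebar\psi$ iff $M\models_X\phi$ or $M\models_X\psi$; $M\models_X\phi\to\psi$ iff for every $Y\subseteq X$, $M\models_Y\phi$ implies $M\models_Y\psi$; $M\models_X\exists x\phi$ iff $M\models_{X(F/x)}\phi$ for some $F:X\to M$; $M\models_X\forall x\phi$ iff $M\models_{X(M/x)}\phi$.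 A sentence $\phi$ is true in $M$, written $M\models_{\{\emptyset\}}\phi$, if the team consisting only of the empty assignment satisfies it. $M\models\psi$ for a second-order sentence is standard second-order semantics. *)

From mathcomp Require Import all_boot.
From Stdlib Require Import PeanoNat.

Set Implicit Arguments.
Unset Strict Implicit.
Unset Printing Implicit Defensive.

Record signature := Signature {
  funs : Type;
  fun_ar : funs -> nat;
  rels : Type;
  rel_ar : rels -> nat
}.

Record structure (L : signature) := Structure {
  dom :> Type;
  dom_nonempty : inhabited dom;
  finterp : forall f : funs L, ('I_(fun_ar f) -> dom) -> dom;
  rinterp : forall R : rels L, ('I_(rel_ar R) -> dom) -> Prop
}.

Inductive term (L : signature) : Type :=
| Var : nat -> term L
| App : forall f : funs L, ('I_(fun_ar f) -> term L) -> term L.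

Arguments Var {L} _.
Arguments App {L} _ _.

Inductive term_var (L : signature) (y : nat) : term L -> Prop :=
| tv_var : term_var y (Var y)
| tv_app : forall f (ts : 'I_(fun_ar f) -> term L) i,
    term_var y (ts i) -> term_var y (App f ts).

(* Assignments: partial functions from variables into the domain
   (finite domain in every team reachable from the empty assignment). *)
Definition assignment (L : signature) (M : structure L) := nat -> option M.

Definition empty_assignment (L : signature) (M : structure L) : assignment M :=
  fun _ => None.

Definition upd (L : signature) (M : structure L) (s : assignment M) (x : nat)
    (a : M) : assignment M :=
  fun y => if Nat.eqb y x then Some a else s y.

(* Tarski value of a term under an assignment (relational, since
   assignments are partial): term_val s t a  means  s(t) = a. *)
Inductive term_val (L : signature) (M : structure L) (s : assignment M)
  : term L -> M -> Prop :=
| val_var : forall x a, s x = Some a -> term_val s (Var x) a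
| val_app : forall f (ts : 'I_(fun_ar f) -> term L) (vs : 'I_(fun_ar f) -> M),
    (forall i, term_val s (ts i) (vs i)) ->
    term_val s (App f ts) (@finterp L M f vs).

Inductive atom (L : signature) : Type :=
| AEq : term L -> term L -> atom L
| ARel : forall R : rels L, ('I_(rel_ar R) -> term L) -> atom L.

Definition atom_var (L : signature) (a : atom L) (y : nat) : Prop :=
  match a with
  | AEq t1 t2 => term_var y t1 \/ term_var y t2
  | ARel R ts => exists i, term_var y (ts i)
  end.

Definition atom_sat (L : signature) (M : structure L) (s : assignment M)
    (a : atom L) : Prop :=
  match a with
  | AEq t1 t2 => exists v, term_val s t1 v /\ term_val s t2 v
  | ARel R ts => exists vs : 'I_(rel_ar R) -> M,
      (forall i, term_val s (ts i) (vs i)) /\ @rinterp L M R vs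
  end.

Inductive id_formula (L : signature) : Type :=
| IAtom : atom L -> id_formula L
| IDep : term L -> id_formula L
| IBot : id_formula L
| IAnd : id_formula L -> id_formula L -> id_formula L
| IOr : id_formula L -> id_formula L -> id_formula L
| IImp : id_formula L -> id_formula L -> id_formula L
| IAll : nat -> id_formula L -> id_formula L
| IEx : nat -> id_formula L -> id_formula L.

Fixpoint id_free (L : signature) (phi : id_formula L) (y : nat) : Prop :=
  match phi with
  | IAtom a => atom_var a y
  | IDep t => term_var y t
  | IBot => False
  | IAnd p q | IOr p q | IImp p q => id_free p y \/ id_free q y
  | IAll x p | IEx x p => y <> x /\ id_free p y
  end.

Definition id_sentence (L : signature) (phi : id_formula L) : Prop :=
  forall y, ~ id_free phi y.

Definition team (L : signature) (M : structure L) := assignment M -> Prop.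

Definition team_supp (L : signature) (M : structure L) (X : team M) (x : nat)
    (F : assignment M -> M) : team M :=
  fun s' => exists s, X s /\ s' = upd s x (F s).

Definition team_dup (L : signature) (M : structure L) (X : team M) (x : nat)
    : team M :=
  fun s' => exists s a, X s /\ s' = upd s x a.

Fixpoint id_sat (L : signature) (M : structure L) (X : team M)
    (phi : id_formula L) : Prop :=
  match phi with
  | IAtom a => forall s, X s -> atom_sat s a
  | IDep t => forall s s', X s -> X s' ->
      forall v v', term_val s t v -> term_val s' t v' -> v = v'
  | IBot => forall s, ~ X s
  | IAnd p q => id_sat X p /\ id_sat X q
  | IOr p q => id_sat X p \/ id_sat X q
  | IImp p q => forall Y : team M, (forall s, Y s -> X s) ->
      id_sat Y p -> id_sat Y q
  | IAll x p => id_sat (team_dup X x) p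
  | IEx x p => exists F : assignment M -> M, id_sat (team_supp X x F) p
  end.

Definition id_true (L : signature) (M : structure L) (phi : id_formula L)
    : Prop :=
  id_sat (fun s => s = empty_assignment M) phi.

(* Relation variables are pairs (index, arity). *)
Inductive so_formula (L : signature) : Type :=
| SAtom : atom L -> so_formula L
| SRVar : nat -> forall n : nat, ('I_n -> term L) -> so_formula L
| SNeg : so_formula L -> so_formula L
| SAnd : so_formula L -> so_formula L -> so_formula L
| SOr : so_formula L -> so_formula L -> so_formula L
| SImp : so_formula L -> so_formula L -> so_formula L
| SAll : nat -> so_formula L -> so_formula L
| SEx : nat -> so_formula L -> so_formula L
| SAllR : nat -> nat -> so_formula L -> so_formula L
| SExR : nat -> nat -> so_formula L -> so_formula L.

Fixpoint so_free (L : signature) (phi : so_formula L) (y : nat) : Prop :=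
  match phi with
  | SAtom a => atom_var a y
  | SRVar _ n ts => exists i, term_var y (ts i)
  | SNeg p => so_free p y
  | SAnd p q | SOr p q | SImp p q => so_free p y \/ so_free q y
  | SAll x p | SEx x p => y <> x /\ so_free p y
  | SAllR _ _ p | SExR _ _ p => so_free p y
  end.

Fixpoint so_free_rel (L : signature) (phi : so_formula L) (k n : nat) : Prop :=
  match phi with
  | SAtom _ => False
  | SRVar k' n' _ => k' = k /\ n' = n
  | SNeg p => so_free_rel p k n
  | SAnd p q | SOr p q | SImp p q => so_free_rel p k n \/ so_free_rel q k n
  | SAll _ p | SEx _ p => so_free_rel p k n
  | SAllR k' n' p | SExR k' n' p => ~ (k' = k /\ n' = n) /\ so_free_rel p k n
  end.

Definition so_sentence (L : signature) (phi : so_formula L) : Prop :=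
  (forall y, ~ so_free phi y) /\ (forall k n, ~ so_free_rel phi k n).

Definition rel_env (L : signature) (M : structure L) :=
  nat -> forall n : nat, ('I_n -> M) -> Prop.

Definition rupd (L : signature) (M : structure L) (rho : rel_env M) (k n : nat)
    (P : ('I_n -> M) -> Prop) : rel_env M :=
  fun k' m =>
    match Nat.eq_dec n m with
    | left e => if Nat.eqb k' k
                then eq_rect n (fun j => ('I_j -> M) -> Prop) P m e
                else rho k' m
    | right _ => rho k' m
    end.

Arguments rupd {L M} rho k n P.

Fixpoint so_sat (L : signature) (M : structure L) (s : assignment M)
    (rho : rel_env M) (phi : so_formula L) : Prop :=
  match phi with
  | SAtom a => atom_sat s a
  | SRVar k n ts => exists vs : 'I_n -> M,
      (forall i, term_val s (ts i) (vs i)) /\ rho k n vs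
  | SNeg p => ~ so_sat s rho p
  | SAnd p q => so_sat s rho p /\ so_sat s rho q
  | SOr p q => so_sat s rho p \/ so_sat s rho q
  | SImp p q => so_sat s rho p -> so_sat s rho q
  | SAll x p => forall a : M, so_sat (upd s x a) rho p
  | SEx x p => exists a : M, so_sat (upd s x a) rho p
  | SAllR k n p => forall P : ('I_n -> M) -> Prop, so_sat s (rupd rho k n P) p
  | SExR k n p => exists P : ('I_n -> M) -> Prop, so_sat s (rupd rho k n P) p
  end.

Definition so_true (L : signature) (M : structure L) (psi : so_formula L)
    : Prop :=
  so_sat (empty_assignment M) (fun _ _ _ => False) psi.

From Stdlib Require Import PeanoNat ClassicalEpsilon FunctionalExtensionality
  PropExtensionality Eqdep_dec.
From mathcomp Require Import all_boot zify.

Set Implicit Arguments.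
Unset Strict Implicit.
Unset Printing Implicit Defensive.
Set Bullet Behavior "Strict Subproofs".

(* Since ID has no
   classical negation, a formula is translated together with a polarity
   (the formula or its negation); negation is then only ever applied to
   flat formulas.  First-order variables are moved to the even variables
   0, 2, 4, ... in the order of their quantifiers, so that "depends only on
   the earlier values" is a dependence atom.  A relation variable bound at
   depth m is coded by a value c (at variable 2m) and a function G with
   P(b) <-> c = G(b); the graph of G is carried by fresh odd variables, n
   arguments and a value forced by a dependence atom to be a function of
   them and of the earlier values.  In structures with at least two elements
   every relation has such a code; in one-element structures the only other
   relation is the empty one, which gets its own disjunct.  A classical
   disjunction of flat formulas chooses two values and splits the team on
   whether they are equal.

   Correctness is proved by induction on the formula, for all teams
   satisfying an invariant [good] (uniform domains, full over the argument
   variables, value variables holding the codes): the translation holds in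
   such a team iff the polarised source formula holds at each of its
   assignments.  The team {emptyset} is good, whence the theorem. *)

Lemma term_val_inv (L : signature) (M : structure L) (s : assignment M) t v :
  term_val s t v ->
  match t with
  | Var x => s x = Some v
  | App f ts => exists vs, (forall i, term_val s (ts i) (vs i)) /\ v = @finterp L M f vs
  end.
Proof. destruct 1; eauto. Qed.

Lemma term_var_inv (L : signature) y (t : term L) :
  term_var y t -> match t with Var x => y = x | App f ts => exists i, term_var y (ts i) end.
Proof. destruct 1; eauto. Qed.

Lemma term_val_functional (L : signature) (M : structure L) (s : assignment M) t v v' :
  term_val s t v -> term_val s t v' -> v = v'.
Proof.
  intro H; revert v'; induction H as [x a Hx| f ts vs Hts IH]; intros v' H';
    apply term_val_inv in H'.
  - congruence.
  - destruct H' as [vs' [H1 ->]]. f_equal. apply functional_extensionality.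
    intro i. apply IH. apply H1.
Qed.

Lemma term_val_ext (L : signature) (M : structure L) (s s' : assignment M) t v :
  (forall y, term_var y t -> s y = s' y) -> term_val s t v -> term_val s' t v.
Proof.
  intros H Hv; induction Hv as [x a Hx| f ts vs Hts IH].
  - constructor. rewrite <- H; auto. constructor.
  - constructor. intro i. apply IH. intros y Hy. apply H. econstructor; eauto.
Qed.

Lemma term_val_exists (L : signature) (M : structure L) (s : assignment M) t :
  (forall y, term_var y t -> s y <> None) -> exists v, term_val s t v.
Proof.
  induction t as [x| f ts IH]; intro H.
  - destruct (s x) as [a|] eqn:E; [exists a; constructor; auto|].
    exfalso; apply (H x); [constructor|auto].
  - have [vs Hvs] : exists vs, forall i, term_val s (ts i) (vs i).
    { apply (choice (fun i v => term_val s (ts i) v)).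
      intro i. apply IH. intros y Hy. apply H. econstructor; eauto. }
    exists (@finterp L M f vs). constructor; auto.
Qed.

Fixpoint tren (L : signature) (sg : nat -> nat) (t : term L) : term L :=
  match t with
  | Var x => Var (sg x)
  | App f ts => App f (fun i => tren sg (ts i))
  end.

Definition aren (L : signature) (sg : nat -> nat) (a : atom L) : atom L :=
  match a with
  | AEq t1 t2 => AEq (tren sg t1) (tren sg t2)
  | ARel R ts => @ARel L R (fun i => tren sg (ts i))
  end.

Definition acomp (L : signature) (M : structure L) (s : assignment M) (sg : nat -> nat)
  : assignment M := fun x => s (sg x).

Lemma term_val_ren (L : signature) (M : structure L) (s : assignment M) sg t v :
  term_val s (tren sg t) v <-> term_val (acomp s sg) t v.
Proof.
  revert v; induction t as [x| f ts IH]; intro v; split; intro H; apply term_val_inv in H.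
  - constructor; exact H.
  - constructor; exact H.
  - destruct H as [vs [H ->]]. constructor. intro i. apply IH, H.
  - destruct H as [vs [H ->]]. simpl. constructor. intro i. apply IH, H.
Qed.

Lemma term_var_ren (L : signature) sg y (t : term L) :
  term_var y (tren sg t) -> exists x, term_var x t /\ y = sg x.
Proof.
  induction t as [x| f ts IH]; intro H; apply term_var_inv in H.
  - exists x; split; [constructor|auto].
  - destruct H as [i Hi]. destruct (IH i Hi) as [x [H1 H2]].
    exists x; split; auto. econstructor; eauto.
Qed.

Lemma atom_sat_ren (L : signature) (M : structure L) (s : assignment M) sg a :
  atom_sat s (aren sg a) <-> atom_sat (acomp s sg) a.
Proof.
  destruct a as [t1 t2| R ts]; simpl; split.
  - intros [v [H1 H2]]. exists v; split; apply term_val_ren; auto.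
  - intros [v [H1 H2]]. exists v; split; apply term_val_ren; auto.
  - intros [vs [H1 H2]]. exists vs; split; auto. intro i; apply term_val_ren; auto.
  - intros [vs [H1 H2]]. exists vs; split; auto. intro i; apply term_val_ren; auto.
Qed.

Lemma atom_sat_ext (L : signature) (M : structure L) (s s' : assignment M) a :
  (forall y, atom_var a y -> s y = s' y) -> atom_sat s a -> atom_sat s' a.
Proof.
  destruct a as [t1 t2| R ts]; simpl; intro H.
  - intros [v [H1 H2]]. exists v; split; eapply term_val_ext; try eassumption;
      intros y Hy; apply H; auto.
  - intros [vs [Hv1 Hv2]]. exists vs; split; auto. intro i.
    eapply term_val_ext; [|apply Hv1]. intros y Hy. apply H. eauto.
Qed.

Lemma atom_var_ren (L : signature) sg (a : atom L) y :
  atom_var (aren sg a) y -> exists x, atom_var a x /\ y = sg x.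
Proof.
  destruct a as [t1 t2| R ts]; simpl.
  - intros [H|H]; apply term_var_ren in H; destruct H as [x [H1 H2]]; exists x; auto.
  - intros [i H]; apply term_var_ren in H; destruct H as [x [H1 H2]]; exists x; eauto.
Qed.

Lemma upd_eq (L : signature) (M : structure L) (s : assignment M) x a :
  upd s x a x = Some a.
Proof. by rewrite /upd Nat.eqb_refl. Qed.

Lemma upd_neq (L : signature) (M : structure L) (s : assignment M) x a y :
  y <> x -> upd s x a y = s y.
Proof. by move=> /Nat.eqb_neq H; rewrite /upd H. Qed.

Lemma so_sat_ext (L : signature) (M : structure L) (q : so_formula L) :
  forall (s s' : assignment M) rho, (forall y, so_free q y -> s y = s' y) ->
  (so_sat s rho q <-> so_sat s' rho q).
Proof.
  induction q as [a|kk n ts|p IH|p IHp r IHr|p IHp r IHr|p IHp r IHr|x p IH|x p IH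
                 |kk n p IH|kk n p IH]; intros s s' rho H; simpl in *.
  - split; apply atom_sat_ext; intros; [|symmetry]; auto.
  - split; intros [vs [H1 H2]]; exists vs; split; auto; intro i;
      eapply term_val_ext; try apply H1; intros y Hy; [|symmetry]; apply H; eauto.
  - pose proof (IH s s' rho H); tauto.
  - pose proof (IHp s s' rho (fun y Hy => H y (or_introl Hy))).
    pose proof (IHr s s' rho (fun y Hy => H y (or_intror Hy))). tauto.
  - pose proof (IHp s s' rho (fun y Hy => H y (or_introl Hy))).
    pose proof (IHr s s' rho (fun y Hy => H y (or_intror Hy))). tauto.
  - pose proof (IHp s s' rho (fun y Hy => H y (or_introl Hy))).
    pose proof (IHr s s' rho (fun y Hy => H y (or_intror Hy))). tauto.
  - have E a : so_sat (upd s x a) rho p <-> so_sat (upd s' x a) rho p.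
    { apply IH. intros y Hy. destruct (Nat.eq_dec y x) as [->|ne].
      - by rewrite !upd_eq.
      - rewrite !upd_neq; auto. }
    split; intros H1 a; apply E; auto.
  - have E a : so_sat (upd s x a) rho p <-> so_sat (upd s' x a) rho p.
    { apply IH. intros y Hy. destruct (Nat.eq_dec y x) as [->|ne].
      - by rewrite !upd_eq.
      - rewrite !upd_neq; auto. }
    split; intros [a H1]; exists a; apply E; auto.
  - split; intros H1 P; eapply IH; try apply H1; auto. intros; symmetry; auto.
  - split; intros [P H1]; exists P; eapply IH; try apply H1; auto. intros; symmetry; auto.
Qed.

(** * Team semantics of ID *)

Lemma id_sat_downward_closed (L : signature) (M : structure L) (phi : id_formula L) :
  forall X Y : team M, id_sat X phi -> (forall s, Y s -> X s) -> id_sat Y phi.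
Proof.
  induction phi as [a|t| |p IHp q IHq|p IHp q IHq|p IHp q IHq|x p IH|x p IH];
    intros X Y H HY; simpl in *.
  - intros s Hs; auto.
  - intros s s' Hs Hs'; apply H; auto.
  - intros s Hs; apply (H s); auto.
  - destruct H; split; eauto.
  - destruct H; [left|right]; eauto.
  - intros Z HZ; apply H; auto.
  - eapply IH; [exact H|]. intros s' [s0 [a [H1 H2]]]. exists s0, a; auto.
  - destruct H as [F HF]; exists F. eapply IH; [exact HF|].
    intros s' [s0 [H1 H2]]. exists s0; auto.
Qed.

Lemma id_sat_ext (L : signature) (M : structure L) (phi : id_formula L) (X Y : team M) :
  (forall s, X s <-> Y s) -> (id_sat X phi <-> id_sat Y phi).
Proof.
  intro H; split; intro H1; eapply id_sat_downward_closed; eauto; intro s; apply H.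
Qed.

Definition flat (L : signature) (M : structure L) (a : id_formula L)
    (A : assignment M -> Prop) :=
  forall Y : team M, id_sat Y a <-> forall s, Y s -> A s.

Lemma id_sat_imp_flat (L : signature) (M : structure L) (a p : id_formula L) A (X : team M) :
  flat a A -> (id_sat X (IImp a p) <-> id_sat (fun s => X s /\ A s) p).
Proof.
  intro Ha; simpl; split.
  - intro H. apply H; [tauto|]. apply (proj2 (Ha _)). tauto.
  - intros H Y HY HYa. have HA := proj1 (Ha Y) HYa.
    eapply id_sat_downward_closed; [exact H|]. intros s Hs; split; auto.
Qed.

Lemma flat_atom (L : signature) (M : structure L) (a : atom L) :
  flat (M := M) (IAtom a) (fun s => atom_sat s a).
Proof. intro Y; simpl; tauto. Qed.

Definition itop (L : signature) : id_formula L := IImp (IBot L) (IBot L).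
Definition ineg (L : signature) (p : id_formula L) : id_formula L := IImp p (IBot L).

Lemma flat_neg (L : signature) (M : structure L) (a : id_formula L) A :
  flat (M := M) a A -> flat (M := M) (ineg a) (fun s => ~ A s).
Proof.
  intros Ha Y. rewrite /ineg id_sat_imp_flat; [|exact Ha]. simpl. split.
  - intros H s Hs HA. apply (H s); auto.
  - intros H s [Hs HA]. apply (H s); auto.
Qed.

Definition veq (L : signature) (u w : nat) : id_formula L := IAtom (AEq (Var u) (Var w)).

Definition same_val (L : signature) (M : structure L) (s : assignment M) u w :=
  exists a, s u = Some a /\ s w = Some a.

Lemma flat_veq (L : signature) (M : structure L) u w :
  flat (M := M) (veq L u w) (fun s => same_val s u w).
Proof.
  intro Y. simpl. split; intros H s Hs; destruct (H s Hs) as [v [H1 H2]].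
  - apply term_val_inv in H1. apply term_val_inv in H2. by exists v.
  - exists v; split; constructor; auto.
Qed.

Fixpoint iands (L : signature) (l : list (id_formula L)) : id_formula L :=
  match l with nil => itop L | cons a l => IAnd a (iands l) end.

Lemma id_sat_iands (L : signature) (M : structure L) (X : team M) l :
  id_sat X (iands l) <-> forall p, List.In p l -> id_sat X p.
Proof.
  induction l as [|a l IH]; simpl.
  - split; auto. tauto.
  - rewrite IH. split.
    + intros [H1 H2] p [<-|Hp]; auto.
    + intro H; split; auto.
Qed.

Definition compat (A : Type) (o o' : option A) :=
  forall a b, o = Some a -> o' = Some b -> a = b.

Lemma compat_refl (A : Type) (o : option A) : compat o o.
Proof. intros a b -> H; congruence. Qed.

Lemma compat_eq (A : Type) (o o' : option A) :
  (o = None <-> o' = None) -> compat o o' -> o = o'.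
Proof.
  destruct o as [a|], o' as [b|]; intros H1 H2; auto.
  - f_equal; apply H2; auto.
  - destruct H1 as [_ H1]; discriminate (H1 erefl).
  - destruct H1 as [H1 _]; discriminate (H1 erefl).
Qed.

Lemma compat_defined (A : Type) (o o' : option A) :
  o <> None -> o' <> None -> compat o o' -> o = o'.
Proof. intros H1 H2. apply compat_eq. tauto. Qed.

Lemma id_sat_dep_var (L : signature) (M : structure L) (X : team M) v :
  id_sat X (IDep (Var v) : id_formula L) <->
  forall s s', X s -> X s' -> compat (s v) (s' v).
Proof.
  simpl; split.
  - intros H s s' Hs Hs' a b Ha Hb. apply (H s s' Hs Hs'); constructor; auto.
  - intros H s s' Hs Hs' a b Ha Hb. apply term_val_inv in Ha. apply term_val_inv in Hb.
    exact (H s s' Hs Hs' a b Ha Hb).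
Qed.

(* The dependence atom =(l, x) of dependence logic. *)
Definition dep_on (L : signature) (l : list nat) (x : nat) : id_formula L :=
  IImp (iands (List.map (fun v => IDep (Var v)) l)) (IDep (Var x)).

Lemma id_sat_dep_on (L : signature) (M : structure L) (X : team M) l x :
  id_sat X (dep_on L l x) <->
  forall s s', X s -> X s' -> (forall v, List.In v l -> compat (s v) (s' v)) ->
  compat (s x) (s' x).
Proof.
  rewrite /dep_on /=. split.
  - intros H s s' Hs Hs' Hl.
    set (Z := fun r => r = s \/ r = s').
    have HZX : forall r, Z r -> X r by intros r [E|E]; subst.
    have HZl : id_sat Z (iands (List.map (fun v => IDep (Var v)) l)).
    { apply id_sat_iands. intros p Hp. apply List.in_map_iff in Hp.
      destruct Hp as [v [<- Hv]]. apply id_sat_dep_var.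
      intros r r' [E1|E1] [E2|E2]; subst r r'; try apply compat_refl; auto.
      intros a b Ha Hb. symmetry. exact (Hl v Hv b a Hb Ha). }
    apply (proj1 (id_sat_dep_var Z x) (H Z HZX HZl)); rewrite /Z; auto.
  - intros H Z HZ HZl. apply id_sat_dep_var. intros r r' Hr Hr'. apply H; auto.
    intros v Hv. apply id_sat_iands with (p := IDep (Var v)) in HZl.
    + apply (proj1 (id_sat_dep_var Z v) HZl); auto.
    + apply List.in_map_iff. eauto.
Qed.

Fixpoint ialls (L : signature) (l : list nat) (p : id_formula L) : id_formula L :=
  match l with nil => p | cons v l => IAll v (ialls l p) end.

Fixpoint team_dups (L : signature) (M : structure L) (X : team M) (l : list nat) : team M :=
  match l with nil => X | cons v l => team_dups (team_dup X v) l end.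

Lemma id_sat_ialls (L : signature) (M : structure L) l (X : team M) (p : id_formula L) :
  id_sat X (ialls l p) <-> id_sat (team_dups X l) p.
Proof. elim: l X => [|v l IH] X /=; [tauto|apply IH]. Qed.

Lemma team_dups_spec (L : signature) (M : structure L) l (X : team M) s' :
  team_dups X l s' <->
  exists s, X s /\ (forall v, ~ List.In v l -> s' v = s v) /\
            (forall v, List.In v l -> s' v <> None).
Proof.
  revert X s'; induction l as [|w l IH]; intros X s'; simpl.
  - split.
    + intro H; exists s'; split; auto.
    + intros [s [H1 [H2 _]]].
      have -> : s' = s by apply functional_extensionality; intro v; apply H2; auto.
      auto.
  - rewrite IH. split.
    + intros [s1 [[s [a [Hs ->]]] [H2 H3]]]. exists s; split; auto. split.
      * intros v Hv. rewrite H2; [|tauto]. apply upd_neq. intros ->; tauto.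
      * intros v [<-|Hv]; auto. destruct (List.in_dec Nat.eq_dec w l) as [Hin|Hn]; auto.
        rewrite H2; auto. rewrite upd_eq; discriminate.
    + intros [s [Hs [H2 H3]]].
      destruct (s' w) as [a|] eqn:Ew; [|exfalso; apply (H3 w); auto].
      exists (upd s w a); split; [exists s, a; auto|split].
      * intros v Hv. destruct (Nat.eq_dec v w) as [->|ne].
        -- rewrite upd_eq; auto.
        -- rewrite upd_neq; auto. apply H2. intros [?|?]; auto.
      * intros v Hv; apply H3; auto.
Qed.

(** * Good teams *)

(* Variable layout: the even variable 2j holds the j-th quantified
   first-order value; a relation coded from column k uses the odd variables
   [valvar k] = 2k+1 and [argvar k i] = 2(k+1+i)+1 for i < n. *)
Definition argvar (k i : nat) : nat := 2*k + 3 + 2*i.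
Definition valvar (k : nat) : nat := 2*k + 1.

Fixpoint evens (m : nat) : list nat :=
  match m with 0 => nil | S m' => 2*m' :: evens m' end.

Fixpoint argvars (k n : nat) : list nat :=
  match n with 0 => nil | S n' => argvar k n' :: argvars k n' end.

Lemma in_evens v m : List.In v (evens m) <-> exists j, j < m /\ v = 2*j.
Proof.
  elim: m => [|m IH] /=.
  - split; [tauto|]. intros [j [H _]]. lia.
  - rewrite IH. split.
    + intros [E|[j [H1 H2]]]; [exists m|exists j]; split; auto; lia.
    + intros [j [H1 H2]]. destruct (Nat.eq_dec j m) as [->|E]; [by left|].
      right; exists j; split; [lia|auto].
Qed.

Lemma in_argvars v k n : List.In v (argvars k n) <-> exists i : 'I_n, v = argvar k i.
Proof.
  elim: n => [|n IH] /=.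
  - split; [tauto|]. intros [[i Hi] _]. lia.
  - rewrite IH. split.
    + intros [E|[i Hi]].
      * by exists (Ordinal (ltnSn n)).
      * by exists (Ordinal (leqW (ltn_ord i))).
    + intros [[i Hi] E]. simpl in E. destruct (Nat.eq_dec i n) as [->|E2]; [by left|].
      right. have Hi' : i < n by lia. by exists (Ordinal Hi').
Qed.

(* [codes M] assigns to a depth m0 and an arity n the function G m0 n whose
   graph codes the relation variable quantified at depth m0. *)
Definition codes (L : signature) (M : structure L) :=
  nat -> forall n : nat, assignment M -> ('I_n -> M) -> M.

Definition code_local (L : signature) (M : structure L) m n
    (Gn : assignment M -> ('I_n -> M) -> M) :=
  forall s s' : assignment M, (forall j, j <= m -> s (2*j) = s' (2*j)) -> Gn s = Gn s'.

(* The relation variable coded at depth m0 with columns from k0: the code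
   reads only the values quantified up to depth m0, the value variable holds
   the code of the argument variables, and T is full over the arguments. *)
Definition code_ok (L : signature) (M : structure L) (G : codes M) (m k : nat)
    (T : team M) (n m0 k0 : nat) : Prop :=
  m0 < m /\ k0 + n + 1 <= k /\
  code_local m0 (G m0 n) /\
  (forall s, T s -> forall b : 'I_n -> M, (forall i : 'I_n, s (argvar k0 i) = Some (b i)) ->
     s (valvar k0) = Some (G m0 n s b)) /\
  (forall s, T s -> forall b : 'I_n -> M, exists s', T s' /\
     (forall j, s (2*j) = s' (2*j)) /\ forall i : 'I_n, s' (argvar k0 i) = Some (b i)).

(* [re kk n = Some (m0, k0)]: the relation variable X_kk^n is coded at depth
   m0 from column k0; [None]: it denotes the empty relation. *)
Definition renv := nat -> nat -> option (nat * nat).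

Definition good (L : signature) (M : structure L) (re : renv) (G : codes M) (m k : nat)
    (T : team M) : Prop :=
  (forall s s', T s -> T s' -> forall v, s v = None <-> s' v = None) /\
  (forall s, T s -> forall j, (m <= j -> s (2*j) = None) /\ (k <= j -> s (2*j+1) = None)) /\
  (forall s, T s -> forall j, j < m -> s (2*j) <> None) /\
  (forall kk n m0 k0, re kk n = Some (m0,k0) -> code_ok G m k T n m0 k0).

Lemma good_restrict (L : signature) (M : structure L) re (G : codes M) m k (T Y : team M) :
  good re G m k T -> (forall s, Y s -> T s) ->
  (forall s s0, Y s -> T s0 -> (forall j, s (2*j) = s0 (2*j)) -> Y s0) ->
  good re G m k Y.
Proof.
  intros [HU [HF [HD HE]]] HY HC. split; [|split; [|split]].
  - intros; apply HU; auto.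
  - intros; apply HF; auto.
  - intros; apply HD; auto.
  - intros kk n m0 k0 Hre. destruct (HE _ _ _ _ Hre) as [H1 [H2 [H3 [H4 H5]]]].
    split; [|split; [|split; [|split]]]; auto.
    intros s Hs b. destruct (H5 s (HY s Hs) b) as [s' [Hs' [E1 E2]]].
    exists s'; split; eauto.
Qed.

Lemma good_extend (L : signature) (M : structure L) re (G : codes M) m k (T T' : team M) :
  good re G m k T ->
  (forall s', T' s' -> exists s a, T s /\ s' = upd s (2*m) a) ->
  (forall s s0 a, T s -> T' (upd s (2*m) a) -> T s0 -> (forall j, s (2*j) = s0 (2*j)) ->
     T' (upd s0 (2*m) a)) ->
  good re G (m+1) k T'.
Proof.
  intros [HU [HF [HD HE]]] H1 H2. split; [|split; [|split]].
  - intros s1 s1' Hs1 Hs1' v.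
    destruct (H1 _ Hs1) as [s [a [Hs ->]]]; destruct (H1 _ Hs1') as [s' [a' [Hs' ->]]].
    destruct (Nat.eq_dec v (2*m)) as [->|E].
    + rewrite !upd_eq; split; discriminate.
    + rewrite !upd_neq; auto.
  - intros s1 Hs1 j. destruct (H1 _ Hs1) as [s [a [Hs ->]]].
    destruct (HF s Hs j) as [F1 F2].
    split; intro Hj; rewrite upd_neq; [apply F1|lia|apply F2|lia]; lia.
  - intros s1 Hs1 j Hj. destruct (H1 _ Hs1) as [s [a [Hs ->]]].
    destruct (Nat.eq_dec j m) as [->|E].
    + rewrite upd_eq; discriminate.
    + rewrite upd_neq; [|lia]. apply HD; auto. lia.
  - intros kk n m0 k0 Hre. destruct (HE _ _ _ _ Hre) as [E1 [E2 [E3 [E4 E5]]]].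
    split; [lia|split; [lia|split; [auto|split]]].
    + intros s1 Hs1 b Hb. destruct (H1 _ Hs1) as [s [a [Hs ->]]].
      rewrite upd_neq; [|rewrite /valvar; lia].
      rewrite (E3 _ s). apply E4; auto.
      * intro i. rewrite <- (Hb i). rewrite upd_neq; auto. rewrite /argvar; lia.
      * intros j Hj. rewrite upd_neq; auto. lia.
    + intros s1 Hs1 b. destruct (H1 _ Hs1) as [s [a [Hs ->]]].
      destruct (E5 s Hs b) as [s' [Hs' [F1 F2]]].
      exists (upd s' (2*m) a). split; [eapply H2; eauto|split].
      * intro j. destruct (Nat.eq_dec j m) as [->|E].
        -- by rewrite !upd_eq.
        -- rewrite !upd_neq; try lia. auto.
      * intro i. rewrite upd_neq; auto. rewrite /argvar; lia.
Qed.

Lemma good_team_dup (L : signature) (M : structure L) re (G : codes M) m k (T : team M) :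
  good re G m k T -> good re G (m+1) k (team_dup T (2*m)).
Proof.
  intro HG. eapply good_extend; [exact HG| |].
  - intros s' [s [a [Hs E]]]; eauto.
  - intros s s0 a _ _ Hs0 _. exists s0, a; auto.
Qed.

Lemma upd_inj (L : signature) (M : structure L) (s s1 : assignment M) x a a1 :
  upd s x a = upd s1 x a1 -> a = a1 /\ forall y, y <> x -> s y = s1 y.
Proof.
  intro E. split.
  - have E2 : upd s x a x = upd s1 x a1 x by rewrite E.
    rewrite !upd_eq in E2. congruence.
  - intros y Hy. rewrite -(upd_neq s a Hy) -(upd_neq s1 a1 Hy) E; auto.
Qed.

Lemma good_team_supp (L : signature) (M : structure L) re (G : codes M) m k (T : team M) F :
  good re G m k T ->
  (forall s s', T s -> T s' -> (forall j, j < m -> s (2*j) = s' (2*j)) -> F s = F s') ->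
  good re G (m+1) k (team_supp T (2*m) F).
Proof.
  intros HG HFi. eapply good_extend; [exact HG| |].
  - intros s' [s [Hs E]]; eauto.
  - intros s s0 a Hs [s1 [Hs1 E]] Hs0 Hj. exists s0; split; auto.
    destruct (upd_inj E) as [-> Hother]. f_equal.
    apply HFi; auto. intros j Hjm. rewrite -Hj Hother; auto. lia.
Qed.

Definition iex_dep (L : signature) m (p : id_formula L) : id_formula L :=
  IEx (2*m) (IAnd (dep_on L (evens m) (2*m)) p).

Lemma id_sat_iex_dep (L : signature) (M : structure L) (X : team M) m (p : id_formula L) :
  (forall s s', X s -> X s' -> forall v, s v = None <-> s' v = None) ->
  (id_sat X (iex_dep m p) <->
   exists F, (forall s s', X s -> X s' -> (forall j, j < m -> s (2*j) = s' (2*j)) ->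
                F s = F s')
             /\ id_sat (team_supp X (2*m) F) p).
Proof.
  intro HU. split.
  - intros [F [Hd Hp]]. exists F; split; auto.
    intros s s' Hs Hs' Hj.
    apply (proj1 (id_sat_dep_on _ _ _)) with (s := upd s (2*m) (F s))
      (s' := upd s' (2*m) (F s')) in Hd.
    + apply Hd; rewrite upd_eq; auto.
    + exists s; auto.
    + exists s'; auto.
    + intros v Hv. apply in_evens in Hv. destruct Hv as [j [Hj1 ->]].
      rewrite !upd_neq; try lia. rewrite Hj; auto. apply compat_refl.
  - intros [F [HF Hp]]. exists F; split; auto.
    apply id_sat_dep_on. intros r r' [s [Hs ->]] [s' [Hs' ->]] Hl.
    rewrite !upd_eq. intros a b [= <-] [= <-].
    apply HF; auto. intros j Hj.
    have Hc := Hl (2*j) (proj2 (in_evens _ _) (ex_intro _ j (conj Hj erefl))).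
    rewrite !upd_neq in Hc; try lia. apply compat_eq; auto.
Qed.

(** * The translation *)

Definition renv_upd (re : renv) (kk n : nat) (o : option (nat * nat)) : renv :=
  fun kk' n' => if Nat.eqb kk' kk then (if Nat.eqb n' n then o else re kk' n') else re kk' n'.

Definition decode (L : signature) (M : structure L) (re : renv) (G : codes M)
    (s : assignment M) : rel_env M :=
  fun kk n => match re kk n with
              | Some (m0, _) => fun b => s (2*m0) = Some (G m0 n s b)
              | None => fun _ => False
              end.

Definition codes_upd (L : signature) (M : structure L) (G : codes M) (m n : nat)
   (Gn : assignment M -> ('I_n -> M) -> M) : codes M :=
  fun m' n' => if Nat.eqb m' m then
                 match Nat.eq_dec n n' with
                 | left e => eq_rect n (fun n0 => assignment M -> ('I_n0 -> M) -> M) Gn n' e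
                 | right _ => G m' n'
                 end
               else G m' n'.
Arguments codes_upd {L M} G m n Gn _ _.

Lemma codes_upd_eq (L : signature) (M : structure L) (G : codes M) m n Gn :
  codes_upd G m n Gn m n = Gn.
Proof.
  rewrite /codes_upd Nat.eqb_refl. destruct (Nat.eq_dec n n) as [e|ne]; [|done].
  by rewrite (UIP_refl_nat _ e).
Qed.

Lemma codes_upd_neq (L : signature) (M : structure L) (G : codes M) m n Gn m' n' :
  m' <> m -> codes_upd G m n Gn m' n' = G m' n'.
Proof. by move=> /Nat.eqb_neq H; rewrite /codes_upd H. Qed.

Definition codes_local (L : signature) (M : structure L) (re : renv) (G : codes M) m :=
  forall kk n m0 k0, re kk n = Some (m0, k0) -> m0 < m /\ code_local m0 (G m0 n).

Lemma good_codes_local (L : signature) (M : structure L) re (G : codes M) m k (T : team M) :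
  good re G m k T -> codes_local re G m.
Proof.
  intros [_ [_ [_ HE]]] kk n m0 k0 H. destruct (HE _ _ _ _ H) as [H1 [_ [H3 _]]]. auto.
Qed.

Lemma decode_local (L : signature) (M : structure L) re (G : codes M) m (s s' : assignment M) :
  codes_local re G m -> (forall j, j < m -> s (2*j) = s' (2*j)) ->
  decode re G s = decode re G s'.
Proof.
  intros HE Hj. apply functional_extensionality; intro kk.
  apply functional_extensionality_dep; intro n. rewrite /decode.
  destruct (re kk n) as [[m0 k0]|] eqn:E; auto.
  destruct (HE _ _ _ _ E) as [H1 H2]. rewrite (H2 s s'); [|intros j Hj'; apply Hj; lia].
  rewrite Hj; auto.
Qed.

Lemma decode_upd_none (L : signature) (M : structure L) re (G : codes M) (s : assignment M)
    kk n :
  decode (renv_upd re kk n None) G s = rupd (decode re G s) kk n (fun _ => False).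
Proof.
  apply functional_extensionality; intro kk'.
  apply functional_extensionality_dep; intro n'. rewrite /rupd /decode /renv_upd.
  destruct (Nat.eq_dec n n') as [<-|ne].
  - simpl. rewrite Nat.eqb_refl. by destruct (Nat.eqb kk' kk).
  - have -> : Nat.eqb n' n = false by apply Nat.eqb_neq; auto.
    by destruct (Nat.eqb kk' kk).
Qed.

Lemma decode_upd_some (L : signature) (M : structure L) re (G : codes M) (s : assignment M)
    kk n m k Gn :
  (forall kk' n' m0 k0, re kk' n' = Some (m0, k0) -> m0 < m) ->
  decode (renv_upd re kk n (Some (m, k))) (codes_upd G m n Gn) s =
  rupd (decode re G s) kk n (fun b => s (2*m) = Some (Gn s b)).
Proof.
  intro HE. apply functional_extensionality; intro kk'.
  apply functional_extensionality_dep; intro n'. rewrite /rupd /decode /renv_upd.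
  have Hold : forall n'', match re kk' n'' with
                | Some (m0, _) => fun b => s (2*m0) = Some (codes_upd G m n Gn m0 n'' s b)
                | None => fun _ => False end
              = match re kk' n'' with
                | Some (m0, _) => fun b => s (2*m0) = Some (G m0 n'' s b)
                | None => fun _ => False end.
  { intro n''. destruct (re kk' n'') as [[m0 k0]|] eqn:E; auto.
    rewrite codes_upd_neq; auto. specialize (HE _ _ _ _ E). lia. }
  destruct (Nat.eq_dec n n') as [<-|ne].
  - simpl. rewrite Nat.eqb_refl. destruct (Nat.eqb kk' kk); [by rewrite codes_upd_eq|].
    apply Hold.
  - have -> : Nat.eqb n' n = false by apply Nat.eqb_neq; auto.
    destruct (Nat.eqb kk' kk); apply Hold.
Qed.

Definition fv_even (L : signature) (sg : nat -> nat) (q : so_formula L) m :=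
  forall y, so_free q y -> exists j, j < m /\ sg y = 2*j.

Lemma fv_even_mono (L : signature) sg (q : so_formula L) m m' :
  fv_even sg q m -> m <= m' -> fv_even sg q m'.
Proof. intros H Hm y Hy. destruct (H y Hy) as [j [Hj E]]. exists j; split; auto. lia. Qed.

Definition polar (b : bool) (P : Prop) : Prop := if b then P else ~ P.

Lemma polar_iff b (X Y : Prop) : (X <-> Y) -> (polar b X <-> polar b Y).
Proof. destruct b; simpl; tauto. Qed.

Lemma so_sat_decode_local (L : signature) (M : structure L) sg (q : so_formula L) re
    (G : codes M) m (s s' : assignment M) :
  fv_even sg q m -> codes_local re G m -> (forall j, j < m -> s (2*j) = s' (2*j)) ->
  (so_sat (acomp s sg) (decode re G s) q <-> so_sat (acomp s' sg) (decode re G s') q).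
Proof.
  intros HW HE Hj. rewrite (decode_local HE Hj). apply so_sat_ext.
  intros y Hy. destruct (HW y Hy) as [j [H1 H2]]. by rewrite /acomp H2 Hj.
Qed.

(* Classical disjunction of flat formulas: either one disjunct holds in the
   whole team, or two values are chosen (uniformly in the earlier variables)
   and the team is split on whether they are equal.  The translations p2, q2
   are those of the disjuncts two levels deeper. *)
Definition ior_cl (L : signature) m (p0 q0 p2 q2 : id_formula L) : id_formula L :=
  IOr (IOr p0 q0) (iex_dep m (iex_dep (m+1)
         (IAnd (IImp (veq L (2*m) (2*(m+1))) p2)
               (IImp (ineg (veq L (2*m) (2*(m+1)))) q2)))).

Definition dep_val (L : signature) m k n : id_formula L :=
  dep_on L (List.app (evens (m+1)) (argvars k n)) (valvar k).

(* Relation quantifiers: pb is the body with the empty relation, pe the body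
   with the relation coded at depth m from column k. *)
Definition iex_rel (L : signature) m k n (pb pe : id_formula L) : id_formula L :=
  IOr pb (iex_dep m (ialls (argvars k n) (IEx (valvar k) (IAnd (dep_val L m k n) pe)))).

Definition iall_rel (L : signature) m k n (pb pe : id_formula L) : id_formula L :=
  IAnd pb (IAll (2*m) (ialls (argvars k n) (IAll (valvar k) (IImp (dep_val L m k n) pe)))).

Definition args_eq (L : signature) (sg : nat -> nat) k n (ts : 'I_n -> term L)
  : id_formula L :=
  iands (List.map (fun i : 'I_n => IAtom (AEq (Var (argvar k i)) (tren sg (ts i))))
                  (enum 'I_n)).

Definition ren_upd (sg : nat -> nat) (x v : nat) : nat -> nat :=
  fun y => if Nat.eqb y x then v else sg y.

Fixpoint translate (L : signature) (sg : nat -> nat) (re : renv) (m k : nat) (pol : bool)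
    (q : so_formula L) {struct q} : id_formula L :=
  match q with
  | SAtom a => if pol then IAtom (aren sg a) else ineg (IAtom (aren sg a))
  | SRVar kk n ts =>
      match re kk n with
      | None => if pol then IBot L else itop L
      | Some (m0, k0) => IImp (args_eq sg k0 ts)
           (if pol then veq L (valvar k0) (2*m0) else ineg (veq L (valvar k0) (2*m0)))
      end
  | SNeg p => translate sg re m k (negb pol) p
  | SAnd p r =>
      if pol then IAnd (translate sg re m k true p) (translate sg re m k true r)
      else ior_cl m (translate sg re m k false p) (translate sg re m k false r)
                    (translate sg re (m+2) k false p) (translate sg re (m+2) k false r)
  | SOr p r =>
      if pol then ior_cl m (translate sg re m k true p) (translate sg re m k true r)
                    (translate sg re (m+2) k true p) (translate sg re (m+2) k true r)
      else IAnd (translate sg re m k false p) (translate sg re m k false r)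
  | SImp p r =>
      if pol then ior_cl m (translate sg re m k false p) (translate sg re m k true r)
                    (translate sg re (m+2) k false p) (translate sg re (m+2) k true r)
      else IAnd (translate sg re m k true p) (translate sg re m k false r)
  | SAll x p =>
      if pol then IAll (2*m) (translate (ren_upd sg x (2*m)) re (m+1) k true p)
      else iex_dep m (translate (ren_upd sg x (2*m)) re (m+1) k false p)
  | SEx x p =>
      if pol then iex_dep m (translate (ren_upd sg x (2*m)) re (m+1) k true p)
      else IAll (2*m) (translate (ren_upd sg x (2*m)) re (m+1) k false p)
  | SAllR kk n p =>
      let pb := translate sg (renv_upd re kk n None) m k pol p in
      let pe := translate sg (renv_upd re kk n (Some (m, k))) (m+1) (k+n+1) pol p in
      if pol then iall_rel m k n pb pe else iex_rel m k n pb pe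
  | SExR kk n p =>
      let pb := translate sg (renv_upd re kk n None) m k pol p in
      let pe := translate sg (renv_upd re kk n (Some (m, k))) (m+1) (k+n+1) pol p in
      if pol then iex_rel m k n pb pe else iall_rel m k n pb pe
  end.

Lemma good_restrict_even (L : signature) (M : structure L) re (G : codes M) m k (T : team M)
    (P : assignment M -> Prop) :
  good re G m k T -> (forall s s0, (forall j, s (2*j) = s0 (2*j)) -> P s -> P s0) ->
  good re G m k (fun s => T s /\ P s).
Proof.
  intros HG HP. eapply good_restrict; [exact HG| |].
  - by intros s [].
  - intros s s0 [H1 H2] H3 H4. split; eauto.
Qed.

Lemma trivial_or_two (A : Type) : (forall a b : A, a = b) \/ exists a0 a1 : A, a0 <> a1.
Proof.
  destruct (classic (exists a0 a1 : A, a0 <> a1)) as [H|H]; [by right|left].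
  intros a b. apply NNPP. intro X. apply H. eauto.
Qed.

Lemma assignment_eq_trivial (L : signature) (M : structure L) (s s' : assignment M) :
  (forall a b : M, a = b) -> (forall v, s v = None <-> s' v = None) -> s = s'.
Proof.
  intros H1 H2. apply functional_extensionality; intro v. apply compat_eq; auto.
  intros a b _ _. apply H1.
Qed.

Section ClassicalOr.

Variables (L : signature) (M : structure L) (re : renv) (G : codes M) (m k : nat).
Variables (p0 q0 p2 q2 : id_formula L) (A B : assignment M -> Prop).

Hypothesis Hp0 : forall T, good re G m k T -> (id_sat T p0 <-> forall s, T s -> A s).
Hypothesis Hq0 : forall T, good re G m k T -> (id_sat T q0 <-> forall s, T s -> B s).
Hypothesis Hp2 : forall T, good re G (m+2) k T -> (id_sat T p2 <-> forall s, T s -> A s).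
Hypothesis Hq2 : forall T, good re G (m+2) k T -> (id_sat T q2 <-> forall s, T s -> B s).
Hypothesis HA : forall s s', (forall j, j < m -> s (2*j) = s' (2*j)) -> (A s <-> A s').
Hypothesis HB : forall s s', (forall j, j < m -> s (2*j) = s' (2*j)) -> (B s <-> B s').

Let split_eq (s : assignment M) := same_val s (2*m) (2*(m+1)).

Lemma split_eq_even s s0 : (forall j, s (2*j) = s0 (2*j)) -> split_eq s -> split_eq s0.
Proof. intros Hj [a [E1 E2]]. exists a. by rewrite -!Hj. Qed.

Lemma split_neq_even s s0 : (forall j, s (2*j) = s0 (2*j)) -> ~ split_eq s -> ~ split_eq s0.
Proof. intros Hj H1 H2. apply H1. eapply split_eq_even; [|exact H2]. auto. Qed.

Lemma ior_cl_elim (T : team M) :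
  good re G m k T -> id_sat T (ior_cl m p0 q0 p2 q2) -> forall s, T s -> A s \/ B s.
Proof.
  intros HG [[H|H]|H] s Hs.
  - left. exact (proj1 (Hp0 HG) H s Hs).
  - right. exact (proj1 (Hq0 HG) H s Hs).
  - apply (id_sat_iex_dep _ _ (proj1 HG)) in H. destruct H as [F1 [HF1 H]].
    have HG1 := good_team_supp HG HF1.
    apply (id_sat_iex_dep _ _ (proj1 HG1)) in H. destruct H as [F2 [HF2 [Ha Hb]]].
    have HG2 := good_team_supp HG1 HF2. replace (m+1+1) with (m+2) in HG2 by lia.
    rewrite (id_sat_imp_flat _ _ (flat_veq _ _)) in Ha.
    rewrite (id_sat_imp_flat _ _ (flat_neg (flat_veq _ _))) in Hb.
    have {}Ha := proj1 (Hp2 (good_restrict_even HG2 split_eq_even)) Ha.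
    have {}Hb := proj1 (Hq2 (good_restrict_even HG2 split_neq_even)) Hb.
    set (s1 := upd s (2*m) (F1 s)). set (s2 := upd s1 (2*(m+1)) (F2 s1)).
    have Hs2 : team_supp (team_supp T (2*m) F1) (2*(m+1)) F2 s2.
    { exists s1; split; auto. exists s; split; auto. }
    have Hj : forall j, j < m -> s2 (2*j) = s (2*j).
    { intros j Hj. rewrite /s2 /s1 !upd_neq; auto; lia. }
    destruct (classic (split_eq s2)) as [E|E].
    + left. apply (HA Hj). apply Ha; split; auto.
    + right. apply (HB Hj). apply Hb; split; auto.
Qed.

(* In a trivial structure a good team has at most one assignment, so one
   disjunct holds in all of it. *)
Lemma ior_cl_intro_trivial (T : team M) :
  good re G m k T -> (forall a b : M, a = b) -> (forall s, T s -> A s \/ B s) ->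
  id_sat T (ior_cl m p0 q0 p2 q2).
Proof.
  intros HG Htriv H. left.
  have Hsingle : forall s s0, T s -> T s0 -> s = s0.
  { intros s s0 Hs Hs0. apply assignment_eq_trivial; auto. apply (proj1 HG); auto. }
  destruct (classic (exists s0, T s0)) as [[s0 Hs0]|Hno].
  - destruct (H s0 Hs0) as [X|X]; [left; apply (proj2 (Hp0 HG))|right; apply (proj2 (Hq0 HG))];
      intros s Hs; by rewrite (Hsingle s s0 Hs Hs0).
  - left. apply (proj2 (Hp0 HG)). intros s Hs. exfalso; eauto.
Qed.

(* With two distinct values a0, a1 the second choice is a0 exactly where A
   holds, so [split_eq] separates the A-part of the team from the rest. *)
Lemma ior_cl_intro_two (T : team M) (a0 a1 : M) :
  good re G m k T -> a0 <> a1 -> (forall s, T s -> A s \/ B s) ->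
  id_sat T (ior_cl m p0 q0 p2 q2).
Proof.
  intros HG Ha01 H. right. apply (id_sat_iex_dep _ _ (proj1 HG)).
  have HF1 : forall s s', T s -> T s' -> (forall j, j < m -> s (2*j) = s' (2*j)) ->
               (fun _ : assignment M => a0) s = (fun _ => a0) s' by [].
  exists (fun _ => a0). split; [exact HF1|].
  have HG1 := good_team_supp HG HF1.
  apply (id_sat_iex_dep _ _ (proj1 HG1)).
  set (F2 := fun s : assignment M => if excluded_middle_informative (A s) then a0 else a1).
  have HF2 : forall s s', team_supp T (2*m) (fun _ => a0) s ->
               team_supp T (2*m) (fun _ => a0) s' ->
               (forall j, j < m+1 -> s (2*j) = s' (2*j)) -> F2 s = F2 s'.
  { intros s s' _ _ Hj. have HAs : A s <-> A s' by apply HA; intros j Hj'; apply Hj; lia.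
    rewrite /F2; do 2 case: excluded_middle_informative => /= ?; tauto. }
  exists F2; split; [exact HF2|].
  have HG2 := good_team_supp HG1 HF2. replace (m+1+1) with (m+2) in HG2 by lia.
  have Hc : forall s2, team_supp (team_supp T (2*m) (fun _ => a0)) (2*(m+1)) F2 s2 ->
         exists s, T s /\ (forall j, j < m -> s2 (2*j) = s (2*j)) /\ (split_eq s2 <-> A s).
  { intros s2 [s1 [[s [Hs ->]] ->]]. exists s; split; auto.
    have HA1 : A (upd s (2*m) a0) <-> A s by apply HA; intros j Hj'; rewrite upd_neq; [|lia].
    split; [intros j Hj; rewrite !upd_neq; auto; lia|].
    rewrite /split_eq /same_val upd_eq upd_neq; [|lia]. rewrite upd_eq /F2.
    destruct excluded_middle_informative as [X|X]; simpl.
    - split; [tauto|]. by exists a0.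
    - split; [|tauto]. intros [a [[= <-] [= E]]]. by rewrite E in Ha01. }
  split.
  - apply (id_sat_imp_flat _ _ (flat_veq _ _)).
    apply (proj2 (Hp2 (good_restrict_even HG2 split_eq_even))). intros s2 [Hs2 E].
    destruct (Hc _ Hs2) as [s [Hs [Hj HE]]]. apply (HA Hj). by apply HE.
  - apply (id_sat_imp_flat _ _ (flat_neg (flat_veq _ _))).
    apply (proj2 (Hq2 (good_restrict_even HG2 split_neq_even))). intros s2 [Hs2 E].
    destruct (Hc _ Hs2) as [s [Hs [Hj HE]]]. apply (HB Hj).
    destruct (H s Hs) as [X|X]; auto. exfalso; apply E; by apply HE.
Qed.

Lemma id_sat_ior_cl (T : team M) :
  good re G m k T -> (id_sat T (ior_cl m p0 q0 p2 q2) <-> forall s, T s -> A s \/ B s).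
Proof.
  intro HG. split; [exact: ior_cl_elim|intro H].
  destruct (trivial_or_two M) as [Htriv|[a0 [a1 Ha01]]].
  - exact: ior_cl_intro_trivial.
  - exact: ior_cl_intro_two Ha01 H.
Qed.

End ClassicalOr.

Lemma In_mem (T : eqType) (x : T) (s : seq T) : x \in s -> List.In x s.
Proof.
  elim: s => [//|y s IH]. rewrite inE => /orP [/eqP ->|H]; [by left|right; auto].
Qed.

Lemma flat_args_eq (L : signature) (M : structure L) sg k0 n (ts : 'I_n -> term L) :
  flat (M := M) (args_eq sg k0 ts)
    (fun s => forall i : 'I_n, exists v,
       s (argvar k0 i) = Some v /\ term_val s (tren sg (ts i)) v).
Proof.
  intro Y. rewrite /args_eq id_sat_iands. split.
  - intros H s Hs i.
    have Hin : i \in enum 'I_n by rewrite mem_enum.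
    have Hi := List.in_map (fun j : 'I_n => IAtom (AEq (Var (argvar k0 j)) (tren sg (ts j))))
                 _ _ (In_mem Hin).
    destruct (H _ Hi s Hs) as [v [H1 H2]]. apply term_val_inv in H1. eauto.
  - intros H p Hp. apply List.in_map_iff in Hp. destruct Hp as [i [<- _]].
    intros s Hs. destruct (H s Hs i) as [v [E1 E2]]. exists v; split; auto. by constructor.
Qed.

Lemma so_sat_rvar_coded (L : signature) (M : structure L) sg re (G : codes M)
    (s : assignment M) kk n (ts : 'I_n -> term L) m0 k0 :
  re kk n = Some (m0, k0) ->
  (so_sat (acomp s sg) (decode re G s) (SRVar kk ts) <->
   exists vs : 'I_n -> M, (forall i, term_val s (tren sg (ts i)) (vs i)) /\
                          s (2*m0) = Some (G m0 n s vs)).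
Proof.
  intro Hre. rewrite /= /decode Hre.
  split; intros [vs [H1 H2]]; exists vs; split; auto; intro i; apply term_val_ren; auto.
Qed.

Lemma rvar_args_exist (L : signature) (M : structure L) sg m kk n (ts : 'I_n -> term L)
    (s : assignment M) :
  fv_even sg (SRVar kk ts) m -> (forall j, j < m -> s (2*j) <> None) ->
  exists vs : 'I_n -> M, forall i, term_val s (tren sg (ts i)) (vs i).
Proof.
  intros HW HD. apply (choice (fun i v => term_val s (tren sg (ts i)) v)). intro i.
  apply term_val_exists. intros y Hy. apply term_var_ren in Hy.
  destruct Hy as [x [Hx ->]]. destruct (HW x (ex_intro _ i Hx)) as [j [Hj ->]]. auto.
Qed.

Lemma rvar_args_even_ext (L : signature) (M : structure L) sg m kk n (ts : 'I_n -> term L)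
    (s s' : assignment M) :
  fv_even sg (SRVar kk ts) m -> (forall j, s (2*j) = s' (2*j)) ->
  forall i v, term_val s (tren sg (ts i)) v -> term_val s' (tren sg (ts i)) v.
Proof.
  intros HW Hj i v. apply term_val_ext. intros y Hy. apply term_var_ren in Hy.
  destruct Hy as [x [Hx ->]]. destruct (HW x (ex_intro _ i Hx)) as [j [_ ->]]. auto.
Qed.

(* A coded relation variable X(t_1..t_n): setting the argument variables to
   the values of the terms (possible since the team is full over them), the
   value variable holds the code, to be compared with the chosen value. *)
Lemma id_sat_rvar_coded (L : signature) (M : structure L) pol sg re (G : codes M) m k
    (T : team M) kk n (ts : 'I_n -> term L) m0 k0 :
  good re G m k T -> fv_even sg (SRVar kk ts) m -> re kk n = Some (m0, k0) ->
  (id_sat T (IImp (args_eq sg k0 ts) (if pol then veq L (valvar k0) (2*m0)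
                                       else ineg (veq L (valvar k0) (2*m0))))
   <-> forall s, T s -> polar pol (so_sat (acomp s sg) (decode re G s) (SRVar kk ts))).
Proof.
  intros [HU [HF [HD HE]]] HW Hre. destruct (HE _ _ _ _ Hre) as [E1 [E2 [E3 [E4 E5]]]].
  have Hsem := fun s => so_sat_rvar_coded sg G s ts Hre.
  set (EQS := fun s : assignment M => forall i : 'I_n, exists v,
                 s (argvar k0 i) = Some v /\ term_val s (tren sg (ts i)) v).
  have Hargs : forall s (vs : 'I_n -> M), EQS s ->
      (forall i, term_val s (tren sg (ts i)) (vs i)) ->
      forall i : 'I_n, s (argvar k0 i) = Some (vs i).
  { intros s vs HQ Hv i. destruct (HQ i) as [v [-> Ev]]. f_equal.
    eapply term_val_functional; eauto. }
  have Hmove : forall s, T s -> forall vs, (forall i, term_val s (tren sg (ts i)) (vs i)) ->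
      exists s', T s' /\ EQS s' /\ s' (valvar k0) = Some (G m0 n s vs) /\
                 s' (2*m0) = s (2*m0).
  { intros s Hs vs Hv. destruct (E5 s Hs vs) as [s' [Hs' [Hj Hy]]].
    exists s'; split; auto. split; [|split; auto].
    - intro i. exists (vs i); split; auto. exact: rvar_args_even_ext HW Hj _ _ (Hv i).
    - rewrite (E4 s' Hs' vs Hy) (E3 s' s); auto. }
  rewrite (id_sat_imp_flat _ _ (flat_args_eq sg k0 ts)).
  destruct pol; simpl polar.
  - rewrite (flat_veq _ _ _). split.
    + intros H s Hs. apply Hsem. destruct (rvar_args_exist HW (HD s Hs)) as [vs Hvs].
      destruct (Hmove s Hs vs Hvs) as [s' [Hs' [HQ [Ez Ec]]]].
      destruct (H s' (conj Hs' HQ)) as [a [Ea Eb]].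
      rewrite Ez in Ea. injection Ea as <-. exists vs; split; auto. by rewrite -Ec.
    + intros H s [Hs HQ]. destruct (proj1 (Hsem s) (H s Hs)) as [vs [Hv Hc]].
      exists (G m0 n s vs); split; [apply E4; [exact Hs|apply Hargs; auto]|exact Hc].
  - rewrite (flat_neg (flat_veq _ _) _). split.
    + intros H s Hs Hsat. apply Hsem in Hsat. destruct Hsat as [vs [Hv Hc]].
      destruct (Hmove s Hs vs Hv) as [s' [Hs' [HQ [Ez Ec]]]].
      apply (H s' (conj Hs' HQ)). exists (G m0 n s vs); split; auto. by rewrite Ec.
    + intros H s [Hs HQ] [a [Ea Eb]].
      have [vs Hv] : exists vs, forall i, term_val s (tren sg (ts i)) (vs i).
      { apply (choice (fun i v => term_val s (tren sg (ts i)) v)). intro i.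
        destruct (HQ i) as [v [_ Ev]]. eauto. }
      apply (H s Hs). apply Hsem. exists vs; split; auto.
      rewrite (E4 s Hs vs (Hargs s vs HQ Hv)) in Ea. by injection Ea as <-.
Qed.

(** * Teams coding a relation *)

Definition point (L : signature) (M : structure L) : M :=
  epsilon (dom_nonempty M) (fun _ => True).

Definition argvals (L : signature) (M : structure L) k n (s : assignment M) : 'I_n -> M :=
  fun i => odflt (point M) (s (argvar k i)).
Arguments argvals {L M} k n s _.

Lemma argvals_eq (L : signature) (M : structure L) k n (s : assignment M) (b : 'I_n -> M) :
  (forall i : 'I_n, s (argvar k i) = Some (b i)) -> argvals k n s = b.
Proof. intro H. apply functional_extensionality => i. by rewrite /argvals H. Qed.

Lemma argvals_some (L : signature) (M : structure L) k n (s : assignment M) (i : 'I_n) :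
  s (argvar k i) <> None -> s (argvar k i) = Some (argvals k n s i).
Proof. rewrite /argvals. by case: (s (argvar k i)). Qed.

Definition fresh_var m k n (v : nat) : Prop :=
  v = 2*m \/ v = valvar k \/ exists i : 'I_n, v = argvar k i.

Lemma fresh_var_even m k n j : fresh_var m k n (2*j) -> j = m.
Proof. intros [E|[E|[i E]]]; rewrite /valvar /argvar in E; lia. Qed.

Lemma fresh_var_odd m k n j : fresh_var m k n (2*j+1) -> k <= j < k + n + 1.
Proof.
  intros [E|[E|[i E]]]; rewrite /valvar /argvar in E; try lia. have := ltn_ord i. lia.
Qed.

Lemma fresh_var_argvar m k n k0 n0 (i : 'I_n0) :
  k0 + n0 + 1 <= k -> ~ fresh_var m k n (argvar k0 i).
Proof.
  intros H N. have := ltn_ord i. destruct N as [E|[E|[i' E]]]; rewrite /valvar /argvar in E; lia.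
Qed.

Lemma fresh_var_valvar m k n k0 : k0 < k -> ~ fresh_var m k n (valvar k0).
Proof. intros H N. destruct N as [E|[E|[i' E]]]; rewrite /valvar /argvar in E; lia. Qed.

Lemma argvar_neq_even k (i : nat) j : argvar k i <> 2*j.
Proof. rewrite /argvar; lia. Qed.

Definition extends_fresh (L : signature) (M : structure L) m k n (s s3 : assignment M) :=
  (forall v, ~ fresh_var m k n v -> s3 v = s v) /\
  (forall v, fresh_var m k n v -> s3 v <> None).

(* The team coding a relation: the extensions of T by a value c at 2m
   (admissible by Cs), arbitrary arguments, and the code Gn of them. *)
Definition code_team (L : signature) (M : structure L) (T : team M) m k n
    (Cs : assignment M -> M -> Prop) (Gn : assignment M -> ('I_n -> M) -> M) : team M :=
  fun s3 => exists s, T s /\ extends_fresh m k n s s3 /\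
                      (exists c, s3 (2*m) = Some c /\ Cs s c) /\
                      s3 (valvar k) = Some (Gn s3 (argvals k n s3)).
Arguments code_team {L M} T m k n Cs Gn _.

Definition set_args (L : signature) (M : structure L) k n (s : assignment M) (b : 'I_n -> M)
  : assignment M :=
  fun v => match excluded_middle_informative (exists i : 'I_n, v = argvar k i) with
           | left H => Some (b (proj1_sig (constructive_indefinite_description _ H)))
           | right _ => s v
           end.

Lemma set_args_argvar (L : signature) (M : structure L) k n (s : assignment M) b (i : 'I_n) :
  set_args k s b (argvar k i) = Some (b i).
Proof.
  rewrite /set_args. destruct excluded_middle_informative as [H|H]; [|exfalso; eauto].
  destruct constructive_indefinite_description as [i' E]. simpl. do 2 f_equal.
  apply ord_inj. rewrite /argvar in E. lia.
Qed.

Lemma set_args_other (L : signature) (M : structure L) k n (s : assignment M)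
    (b : 'I_n -> M) v :
  (forall i : 'I_n, v <> argvar k i) -> set_args k s b v = s v.
Proof.
  intro Hv. rewrite /set_args. destruct excluded_middle_informative as [[i E]|H]; auto.
  by case: (Hv i E).
Qed.

Definition merge_on (L : signature) (M : structure L) (P : nat -> Prop) (s1 s2 : assignment M)
  : assignment M := fun v => if excluded_middle_informative (P v) then s1 v else s2 v.

Lemma merge_on_in (L : signature) (M : structure L) P (s1 s2 : assignment M) v :
  P v -> merge_on P s1 s2 v = s1 v.
Proof. rewrite /merge_on. by case: excluded_middle_informative. Qed.

Lemma merge_on_out (L : signature) (M : structure L) P (s1 s2 : assignment M) v :
  ~ P v -> merge_on P s1 s2 v = s2 v.
Proof. rewrite /merge_on. by case: excluded_middle_informative. Qed.

Section CodeTeam.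

Variables (L : signature) (M : structure L) (re : renv) (G : codes M) (m k : nat).
Variables (T : team M) (n : nat) (Cs : assignment M -> M -> Prop).
Variable (Gn : assignment M -> ('I_n -> M) -> M).

Hypothesis HC : forall s s', T s -> T s' -> (forall j, s (2*j) = s' (2*j)) ->
  forall c, Cs s c -> Cs s' c.
Hypothesis HGn : code_local m Gn.

Lemma code_team_even (s3 : assignment M) :
  code_team T m k n Cs Gn s3 ->
  exists s, T s /\ extends_fresh m k n s s3 /\ forall j, j < m -> s3 (2*j) = s (2*j).
Proof.
  intros [s [Hs [[X1 X2] _]]]. exists s; split; auto. split; [split; auto|].
  intros j Hj. apply X1. intro N; apply fresh_var_even in N; lia.
Qed.

Lemma code_ok_code_team :
  code_ok (codes_upd G m n Gn) (m+1) (k+n+1) (code_team T m k n Cs Gn) n m k.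
Proof.
  split; [lia|split; [lia|split; [|split]]].
  - by rewrite codes_upd_eq.
  - intros s3 [s [Hs [_ [_ Hz]]]] b Hb. by rewrite codes_upd_eq Hz (argvals_eq Hb).
  - intros s3 [s [Hs [[X1 X2] [Hc Hz]]]] b.
    set (s3' := upd (set_args k s3 b) (valvar k) (Gn s3 b)).
    have Hev : forall j, s3 (2*j) = s3' (2*j).
    { intro j. rewrite /s3' upd_neq; [|rewrite /valvar; lia].
      rewrite set_args_other; auto. intros i E; exact: argvar_neq_even (esym E). }
    have Hy : forall i : 'I_n, s3' (argvar k i) = Some (b i).
    { intro i. rewrite /s3' upd_neq; [|rewrite /valvar /argvar; lia]. apply set_args_argvar. }
    exists s3'; split; [|split; auto].
    exists s; split; auto. split; [split|split].
    + intros v N. rewrite /s3' upd_neq; [|intro E; apply N; right; left; auto].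
      rewrite set_args_other; [|intros i E; apply N; right; right; eauto]. auto.
    + intros v N. rewrite /s3'. destruct (Nat.eq_dec v (valvar k)) as [->|E].
      * rewrite upd_eq; discriminate.
      * rewrite upd_neq; auto.
        destruct (classic (exists i : 'I_n, v = argvar k i)) as [[i ->]|Ni].
        -- rewrite set_args_argvar; discriminate.
        -- rewrite set_args_other; [|intros i Ei; apply Ni; eauto]. apply X2; auto.
    + destruct Hc as [c [Ec Hc]]. exists c; split; auto. by rewrite -Hev.
    + rewrite {1}/s3' upd_eq (argvals_eq Hy). f_equal.
      rewrite (@HGn s3 s3'); [reflexivity|intros j _; apply Hev].
Qed.

(* Codes at depth m0 < m survive: to move the old argument variables, merge
   the fresh part of s3 into the witness given for the underlying team. *)
Lemma code_ok_code_team_old m0 k0 n0 :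
  code_ok G m k T n0 m0 k0 ->
  code_ok (codes_upd G m n Gn) (m+1) (k+n+1) (code_team T m k n Cs Gn) n0 m0 k0.
Proof.
  intros [E1 [E2 [E3 [E4 E5]]]]. have Hm0 : m0 <> m by lia.
  split; [lia|split; [lia|split; [|split]]].
  - by rewrite codes_upd_neq.
  - intros s3 [s [Hs [[X1 X2] _]]] b Hb. rewrite codes_upd_neq; auto.
    rewrite X1; [|apply fresh_var_valvar; lia].
    rewrite (E3 s3 s). apply E4; auto.
    + intro i. rewrite -X1; auto. apply fresh_var_argvar; lia.
    + intros j Hj. apply X1. intro N; apply fresh_var_even in N; lia.
  - intros s3 [s [Hs [[X1 X2] [[c [Ec Hc]] Hz]]]] b.
    destruct (E5 s Hs b) as [s0 [Hs0 [Hj Hy]]].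
    set (s3' := merge_on (fresh_var m k n) s3 s0).
    have Hev : forall j, s3 (2*j) = s3' (2*j).
    { intro j. rewrite /s3'. destruct (classic (fresh_var m k n (2*j))) as [N|N].
      - by rewrite merge_on_in.
      - rewrite merge_on_out; auto. rewrite X1; auto. }
    exists s3'. split; [|split; auto].
    + exists s0; split; auto. split; [split|split].
      * intros v N. by rewrite /s3' merge_on_out.
      * intros v N. rewrite /s3' merge_on_in; auto.
      * exists c; split; [by rewrite -Hev|]. eapply HC; eauto.
      * rewrite /s3' merge_on_in; [|right; left; auto]. rewrite Hz.
        f_equal. rewrite (@HGn s3' s3); [|intros j _; symmetry; apply Hev].
        f_equal. apply functional_extensionality => i. rewrite /argvals merge_on_in; auto.
        right; right; eauto.
    + intro i. rewrite /s3' merge_on_out; auto. apply fresh_var_argvar; lia.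
Qed.

Lemma good_code_team kk :
  good re G m k T ->
  good (renv_upd re kk n (Some (m, k))) (codes_upd G m n Gn) (m+1) (k+n+1)
       (code_team T m k n Cs Gn).
Proof.
  intros [HU [HF [HD HE]]]. split; [|split; [|split]].
  - intros s3 s3' [s [Hs [[X1 X2] _]]] [s' [Hs' [[Y1 Y2] _]]] v.
    destruct (classic (fresh_var m k n v)) as [N|N].
    + split; intro E; exfalso; [apply (X2 v N)|apply (Y2 v N)]; auto.
    + rewrite (X1 v N) (Y1 v N). auto.
  - intros s3 [s [Hs [[X1 X2] _]]] j. split; intro Hj.
    + rewrite X1. apply (HF s Hs j); lia. intro N; apply fresh_var_even in N; lia.
    + rewrite X1. apply (HF s Hs j); lia. intro N; apply fresh_var_odd in N; lia.
  - intros s3 [s [Hs [[X1 X2] _]]] j Hj. destruct (Nat.eq_dec j m) as [->|E].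
    + apply X2. by left.
    + rewrite X1. apply HD; auto; lia. intro N; apply fresh_var_even in N; lia.
  - intros kk' n' m0 k0. rewrite /renv_upd.
    destruct (Nat.eqb_spec kk' kk); [destruct (Nat.eqb_spec n' n)|]; intro Hre.
    + subst n'. injection Hre as <- <-. exact: code_ok_code_team.
    + exact: code_ok_code_team_old (HE _ _ _ _ Hre).
    + exact: code_ok_code_team_old (HE _ _ _ _ Hre).
Qed.

End CodeTeam.

Lemma good_renv_upd_none (L : signature) (M : structure L) re (G : codes M) m k (T : team M)
    kk n :
  good re G m k T -> good (renv_upd re kk n None) G m k T.
Proof.
  intros [HU [HF [HD HE]]]. split; [auto|split; [auto|split; [auto|]]].
  intros kk' n' m0 k0. rewrite /renv_upd.
  destruct (Nat.eqb kk' kk); [destruct (Nat.eqb n' n)|]; try discriminate; eauto.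
Qed.

Lemma code_team_over (L : signature) (M : structure L) re (G : codes M) m k (T : team M) n Cs
    (Gn : assignment M -> ('I_n -> M) -> M) s c :
  good re G m k T -> T s -> Cs s c ->
  code_local m Gn ->
  exists s3, code_team T m k n Cs Gn s3 /\ forall j, j < m -> s3 (2*j) = s (2*j).
Proof.
  intros HG Hs Hc HGn.
  set (s1 := upd s (2*m) c).
  set (s3 := upd (set_args k s1 (fun _ : 'I_n => point M)) (valvar k)
                 (Gn s1 (fun _ => point M))).
  have Hev : forall j, s3 (2*j) = s1 (2*j).
  { intro j. rewrite /s3 upd_neq; [|rewrite /valvar; lia].
    rewrite set_args_other; auto. intros i E; exact: argvar_neq_even (esym E). }
  have Hy : forall i : 'I_n, s3 (argvar k i) = Some (point M).
  { intro i. rewrite /s3 upd_neq; [|rewrite /valvar /argvar; lia]. apply set_args_argvar. }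
  exists s3. split.
  - exists s; split; auto. split; [split|split].
    + intros v N. rewrite /s3 upd_neq; [|intro E; apply N; right; left; auto].
      rewrite set_args_other; [|intros i E; apply N; right; right; eauto].
      rewrite /s1 upd_neq; auto. intro E; apply N; left; auto.
    + intros v N. rewrite /s3. destruct (Nat.eq_dec v (valvar k)) as [->|E].
      * rewrite upd_eq; discriminate.
      * rewrite upd_neq; auto.
        destruct (classic (exists i : 'I_n, v = argvar k i)) as [[i ->]|Ni].
        -- rewrite set_args_argvar; discriminate.
        -- rewrite set_args_other; [|intros i Ei; apply Ni; eauto].
           destruct N as [->|[N|N]]; try tauto. rewrite /s1 upd_eq; discriminate.
    + exists c; split; auto. by rewrite Hev /s1 upd_eq.
    + rewrite {1}/s3 upd_eq (argvals_eq Hy). f_equal.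
      rewrite (HGn s1 s3); [reflexivity|intros j _; symmetry; apply Hev].
  - intros j Hj. rewrite Hev /s1 upd_neq; auto. lia.
Qed.

Lemma id_sat_dep_val (L : signature) (M : structure L) re' (G' : codes M) m k k' n
    (Y : team M) (Gn : assignment M -> ('I_n -> M) -> M) :
  good re' G' (m+1) k' Y ->
  (forall s, Y s -> s (valvar k) = Some (Gn s (argvals k n s))) ->
  (forall s, Y s -> forall i : 'I_n, s (argvar k i) <> None) ->
  code_local m Gn ->
  id_sat Y (dep_val L m k n).
Proof.
  intros [HU [HF [HD HE]]] Hz Hy HGn. apply id_sat_dep_on.
  intros s s' Hs Hs' Hl. rewrite (Hz s Hs) (Hz s' Hs').
  have -> : Gn s = Gn s'.
  { apply HGn. intros j Hj. apply compat_defined; try (apply HD; auto; lia).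
    apply Hl. apply List.in_or_app. left. apply in_evens. exists j; split; auto; lia. }
  have -> : argvals k n s = argvals k n s'.
  { apply functional_extensionality => i. rewrite /argvals. f_equal.
    apply compat_defined; try apply Hy; auto.
    apply Hl. apply List.in_or_app. right. apply in_argvars. eauto. }
  apply compat_refl.
Qed.

(* Conversely, a team satisfying [dep_val] determines a code; [code_of_team]
   reads it off by choice. *)
Definition code_of_team (L : signature) (M : structure L) (Y : team M) m k n
  : assignment M -> ('I_n -> M) -> M :=
  fun s b => epsilon (inhabits (point M)) (fun a => exists y, Y y /\
      (forall j, j <= m -> y (2*j) = s (2*j)) /\ (forall i : 'I_n, y (argvar k i) = Some (b i)) /\
      y (valvar k) = Some a).
Arguments code_of_team {L M} Y m k n _ _.

Lemma code_of_team_local (L : signature) (M : structure L) (Y : team M) m k n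
    (s s' : assignment M) :
  (forall j, j <= m -> s (2*j) = s' (2*j)) -> code_of_team Y m k n s = code_of_team Y m k n s'.
Proof.
  intro Hj. apply functional_extensionality => b. rewrite /code_of_team. f_equal.
  apply functional_extensionality => a. apply propositional_extensionality.
  split; intros [y [H1 [H2 [H3 H4]]]]; exists y; split; auto; split; auto;
    intros j Hj'; [rewrite -Hj|rewrite Hj]; auto.
Qed.

Lemma dep_val_code_of_team (L : signature) (M : structure L) (Y : team M) m k n :
  id_sat Y (dep_val L m k n) ->
  (forall y, Y y -> forall i : 'I_n, y (argvar k i) <> None) ->
  forall y, Y y -> y (valvar k) <> None ->
  y (valvar k) = Some (code_of_team Y m k n y (argvals k n y)).
Proof.
  intros Hd Hy y HY Hz. destruct (y (valvar k)) as [a|] eqn:Ea; [|congruence].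
  rewrite /code_of_team.
  match goal with |- Some a = Some (epsilon ?i ?P) => have HP : P (epsilon i P) end.
  { apply epsilon_spec. exists a, y. split; auto. split; auto. split; auto.
    intro i. apply argvals_some. apply Hy; auto. }
  destruct HP as [y' [HY' [Hj [Hi Hz']]]].
  have Hc : compat (y' (valvar k)) (y (valvar k)).
  { apply (proj1 (id_sat_dep_on _ _ _) Hd y' y HY' HY).
    intros v Hv. apply List.in_app_or in Hv. destruct Hv as [Hv|Hv].
    + apply in_evens in Hv. destruct Hv as [j [Hjm ->]]. rewrite Hj; [apply compat_refl|lia].
    + apply in_argvars in Hv. destruct Hv as [i ->].
      rewrite Hi (argvals_some (Hy y HY i)). apply compat_refl. }
  rewrite Hz' Ea in Hc. f_equal. symmetry. exact: Hc.
Qed.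

Lemma extends_fresh_split (L : signature) (M : structure L) m k n (s s3 : assignment M) :
  extends_fresh m k n s s3 <->
  exists c s2 a,
    (forall v, ~ List.In v (argvars k n) -> s2 v = upd s (2*m) c v) /\
    (forall v, List.In v (argvars k n) -> s2 v <> None) /\ s3 = upd s2 (valvar k) a.
Proof.
  have Hz_arg : ~ List.In (valvar k) (argvars k n).
  { move/in_argvars => [i E]. rewrite /valvar /argvar in E. lia. }
  have Hz_even : valvar k <> 2*m by rewrite /valvar; lia.
  split.
  - intros [X1 X2].
    destruct (s3 (2*m)) as [c|] eqn:Ec; [|exfalso; apply (X2 (2*m)); auto; by left].
    destruct (s3 (valvar k)) as [a|] eqn:Ea;
      [|exfalso; apply (X2 (valvar k)); auto; right; by left].
    exists c, (fun v => if Nat.eqb v (valvar k) then s v else s3 v), a.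
    split; [|split].
    + intros v Hv. destruct (Nat.eqb_spec v (valvar k)) as [->|E].
      * by rewrite upd_neq.
      * destruct (Nat.eq_dec v (2*m)) as [->|E2]; [by rewrite upd_eq|].
        rewrite upd_neq; auto. apply X1. intros [N|[N|N]]; try tauto.
        by apply Hv, in_argvars.
    + intros v Hv. destruct (Nat.eqb_spec v (valvar k)) as [->|E]; [tauto|].
      apply X2. right; right. by apply in_argvars.
    + apply functional_extensionality => v. destruct (Nat.eq_dec v (valvar k)) as [->|Ev].
      * by rewrite upd_eq.
      * rewrite upd_neq; auto. by move: Ev => /Nat.eqb_neq ->.
  - intros [c [s2 [a [D1 [D2 ->]]]]]. split.
    + intros v N. have Hvz : v <> valvar k by intros ->; apply N; right; left.
      rewrite upd_neq; auto. rewrite D1; [|intro Hin; apply N; right; right; by apply in_argvars].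
      apply upd_neq. intros ->; apply N; by left.
    + intros v N. destruct (Nat.eq_dec v (valvar k)) as [->|E]; [rewrite upd_eq; discriminate|].
      rewrite upd_neq; auto. destruct N as [->|[N|N]]; try tauto.
      * rewrite D1; [rewrite upd_eq; discriminate|].
        move/in_argvars => [i Ei]. exact: argvar_neq_even (esym Ei).
      * apply D2. by apply in_argvars.
Qed.

Lemma iall_rel_team (L : signature) (M : structure L) (T : team M) m k n s3 :
  team_dup (team_dups (team_dup T (2*m)) (argvars k n)) (valvar k) s3 <->
  exists s, T s /\ extends_fresh m k n s s3.
Proof.
  split.
  - intros [s2 [a [H2 ->]]]. apply team_dups_spec in H2.
    destruct H2 as [s1 [[s [c [Hs ->]]] [D1 D2]]].
    exists s; split; auto. apply extends_fresh_split. by exists c, s2, a.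
  - intros [s [Hs Hx]]. apply extends_fresh_split in Hx as [c [s2 [a [D1 [D2 ->]]]]].
    exists s2, a. split; auto. apply team_dups_spec.
    exists (upd s (2*m) c). split; [by exists s, c|auto].
Qed.

Lemma iex_rel_team (L : signature) (M : structure L) (T : team M) m k n Fc Fz
    (Gn : assignment M -> ('I_n -> M) -> M) :
  code_local m Gn ->
  (forall s3, team_supp (team_dups (team_supp T (2*m) Fc) (argvars k n)) (valvar k) Fz s3 ->
      s3 (valvar k) = Some (Gn s3 (argvals k n s3))) ->
  forall s3, team_supp (team_dups (team_supp T (2*m) Fc) (argvars k n)) (valvar k) Fz s3 <->
             code_team T m k n (fun s c => c = Fc s) Gn s3.
Proof.
  intros HGn HFn s3. split.
  - intro H3. have Hz := HFn s3 H3. destruct H3 as [s2 [H2 ->]].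
    apply team_dups_spec in H2. destruct H2 as [s1 [[s [Hs ->]] [D1 D2]]].
    exists s; split; auto. split; [apply extends_fresh_split; by exists (Fc s), s2, (Fz s2)|].
    split; auto. exists (Fc s). split; auto.
    rewrite upd_neq; [|rewrite /valvar; lia]. rewrite D1; [by rewrite upd_eq|].
    move/in_argvars => [i Ei]. exact: argvar_neq_even (esym Ei).
  - intros [s [Hs [Hx [[c [Ec ->]] Hz]]]].
    apply extends_fresh_split in Hx as [c' [s2 [a [D1 [D2 ->]]]]].
    have Hm_arg : ~ List.In (2*m) (argvars k n).
    { move/in_argvars => [i Ei]. exact: argvar_neq_even (esym Ei). }
    have Ec' : c' = Fc s.
    { move: Ec. rewrite upd_neq; [|rewrite /valvar; lia]. rewrite D1 // upd_eq. by case. }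
    have H2 : team_dups (team_supp T (2*m) Fc) (argvars k n) s2.
    { apply team_dups_spec. exists (upd s (2*m) (Fc s)). split; [by exists s|].
      split; auto. intros v Hv. by rewrite D1 // Ec'. }
    have Hoff : forall x y v, v <> valvar k -> upd s2 (valvar k) x v = upd s2 (valvar k) y v.
    { intros x y v Hv. by rewrite !upd_neq. }
    have Hfz : Fz s2 = a.
    { have := HFn _ (ex_intro _ s2 (conj H2 erefl)). rewrite upd_eq => [[->]].
      move: Hz. rewrite upd_eq => [[->]].
      rewrite (HGn _ (upd s2 (valvar k) a)); [|intros j _; apply: Hoff; rewrite /valvar; lia].
      f_equal. apply functional_extensionality => i. rewrite /argvals (Hoff (Fz s2) a) //.
      rewrite /valvar /argvar; lia. }
    exists s2. by rewrite Hfz.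
Qed.

Definition rel_code (L : signature) (M : structure L) n (P : ('I_n -> M) -> Prop) (a0 a1 : M)
  : ('I_n -> M) -> M :=
  fun b => if excluded_middle_informative (P b) then a0 else a1.

Lemma rel_code_spec (L : signature) (M : structure L) n (P : ('I_n -> M) -> Prop) a0 a1 :
  a0 <> a1 \/ (forall b, P b) -> (fun b => Some a0 = Some (rel_code P a0 a1 b)) = P.
Proof.
  intro C. apply functional_extensionality => b. apply propositional_extensionality.
  rewrite /rel_code. case: excluded_middle_informative => /= X; [tauto|].
  split; [|tauto]. case=> E. destruct C as [C|C]; [by case: C|exact: C].
Qed.

Section RelQuant.

Variables (L : signature) (M : structure L) (re : renv) (G : codes M) (m k kk n : nat).
Variables (pb pe : id_formula L) (Phi : assignment M -> rel_env M -> Prop).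

Hypothesis Hpb : forall T, good (renv_upd re kk n None) G m k T ->
  (id_sat T pb <-> forall s, T s -> Phi s (rupd (decode re G s) kk n (fun _ => False))).
Hypothesis Hpe : forall (Gn : assignment M -> ('I_n -> M) -> M) T, code_local m Gn ->
  good (renv_upd re kk n (Some (m, k))) (codes_upd G m n Gn) (m+1) (k+n+1) T ->
  (id_sat T pe <-> forall s, T s ->
     Phi s (rupd (decode re G s) kk n (fun b => s (2*m) = Some (Gn s b)))).
Hypothesis HPhi : forall s s' rho, (forall j, j < m -> s (2*j) = s' (2*j)) ->
  (Phi s rho <-> Phi s' rho).

Lemma Phi_transfer s s' (P : ('I_n -> M) -> Prop) :
  codes_local re G m -> (forall j, j < m -> s (2*j) = s' (2*j)) ->
  Phi s (rupd (decode re G s) kk n P) -> Phi s' (rupd (decode re G s') kk n P).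
Proof. intros HE Hj. rewrite -(decode_local HE Hj). exact: (proj1 (HPhi _ Hj)). Qed.

Lemma iex_rel_elim (T : team M) :
  good re G m k T -> id_sat T (iex_rel m k n pb pe) ->
  forall s, T s -> exists P, Phi s (rupd (decode re G s) kk n P).
Proof.
  intros HG [H|H].
  - intros s Hs. exists (fun _ => False). exact: (proj1 (Hpb (good_renv_upd_none kk n HG)) H).
  - apply (id_sat_iex_dep _ _ (proj1 HG)) in H. destruct H as [Fc [HFc H]].
    apply id_sat_ialls in H. destruct H as [Fz [Hd Hpe3]].
    set (T3 := team_supp (team_dups (team_supp T (2*m) Fc) (argvars k n)) (valvar k) Fz) in *.
    set (Gn := code_of_team T3 m k n).
    have HGn : code_local m Gn by move=> s s' Hj; apply code_of_team_local.
    have Hdef : forall y, T3 y -> (forall i : 'I_n, y (argvar k i) <> None) /\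
                                  y (valvar k) <> None.
    { intros y [s2 [H2 ->]]. apply team_dups_spec in H2. destruct H2 as [s1 [_ [_ D2]]].
      split; [|rewrite upd_eq; discriminate].
      intro i. rewrite upd_neq; [|rewrite /valvar /argvar; lia]. apply D2, in_argvars; eauto. }
    have HFn : forall s3, T3 s3 -> s3 (valvar k) = Some (Gn s3 (argvals k n s3)).
    { intros s3 H3. apply (dep_val_code_of_team Hd); auto; [intros; apply Hdef|apply Hdef]; auto. }
    have HGY := good_code_team
                  (fun s s' Hs Hs' Hj c (Hc : c = Fc s) =>
                     etrans Hc (HFc s s' Hs Hs' (fun j _ => Hj j)))
                  HGn kk HG.
    have HpeY : id_sat (code_team T m k n (fun s c => c = Fc s) Gn) pe.
    { by apply (proj1 (id_sat_ext pe (iex_rel_team HGn HFn))). }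
    have Hall := proj1 (Hpe HGn HGY) HpeY.
    intros s Hs.
    destruct (code_team_over (Cs := fun s c => c = Fc s) HG Hs erefl HGn) as [s3 [Hs3 Hj]].
    exists (fun b => s3 (2*m) = Some (Gn s3 b)).
    exact: Phi_transfer (good_codes_local HG) Hj (Hall s3 Hs3).
Qed.

Lemma iex_rel_intro_code (T : team M) (Ps : assignment M -> ('I_n -> M) -> Prop)
    (a0 a1 : M) :
  good re G m k T ->
  (forall s, T s -> Phi s (rupd (decode re G s) kk n (Ps s))) ->
  (forall s s', (forall j, j < m -> s (2*j) = s' (2*j)) -> Ps s = Ps s') ->
  a0 <> a1 \/ (forall s, T s -> forall b, Ps s b) ->
  id_sat T (iex_rel m k n pb pe).
Proof.
  intros HG HPs HPsi C.
  set (Gn := fun s : assignment M => rel_code (Ps s) a0 a1).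
  have HGn : code_local m Gn.
  { intros s s' Hj. by rewrite /Gn (HPsi s s'); [|intros j Hj'; apply Hj; lia]. }
  set (Fc := fun _ : assignment M => a0).
  set (Fz := fun s2 : assignment M => Gn s2 (argvals k n s2)).
  set (T3 := team_supp (team_dups (team_supp T (2*m) Fc) (argvars k n)) (valvar k) Fz).
  have HFn : forall s3, T3 s3 -> s3 (valvar k) = Some (Gn s3 (argvals k n s3)).
  { intros s3 [s2 [H2 ->]]. rewrite upd_eq. f_equal. rewrite /Fz.
    set (s3 := upd s2 (valvar k) (Gn s2 (argvals k n s2))).
    have -> : Gn s3 = Gn s2 by apply HGn => j _; rewrite /s3 upd_neq //; rewrite /valvar; lia.
    have -> // : argvals k n s3 = argvals k n s2.
    apply functional_extensionality => i.
    rewrite /argvals /s3 upd_neq //. rewrite /valvar /argvar; lia. }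
  have HT3 := iex_rel_team HGn HFn.
  have HGY := good_code_team (fun s s' _ _ _ c (Hc : c = Fc s) => Hc) HGn kk HG.
  right. apply (id_sat_iex_dep _ _ (proj1 HG)). exists Fc. split; [done|].
  apply id_sat_ialls. exists Fz. split.
  - apply (proj2 (id_sat_ext _ HT3)). eapply id_sat_dep_val; [exact HGY| | |exact HGn].
    + by intros s3 [s [_ [_ [_ Hz]]]].
    + intros s3 [s [_ [[_ X2] _]]] i. apply X2. right; right; eauto.
  - apply (proj2 (id_sat_ext _ HT3)). apply (proj2 (Hpe HGn HGY)).
    intros s3 [s [Hs [[X1 _] [[c [Ec Hc]] _]]]].
    have Hj : forall j, j < m -> s3 (2*j) = s (2*j).
    { intros j Hj. apply X1. intro N; apply fresh_var_even in N; lia. }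
    have -> : (fun b => s3 (2*m) = Some (Gn s3 b)) = Ps s.
    { rewrite Ec Hc /Gn (HPsi s3 s Hj). apply rel_code_spec.
      destruct C as [C|C]; [by left|right; auto]. }
    apply (Phi_transfer (good_codes_local HG) (s := s)); [intros j Hj'; symmetry; auto|].
    by apply HPs.
Qed.

(* In a trivial structure a nonfull relation is empty, and a good team has at
   most one assignment, so the empty relation serves throughout. *)
Lemma iex_rel_intro (T : team M) :
  good re G m k T -> (forall s, T s -> exists P, Phi s (rupd (decode re G s) kk n P)) ->
  id_sat T (iex_rel m k n pb pe).
Proof.
  intros HG H.
  set (Ps := fun s => epsilon (inhabits (fun _ : 'I_n -> M => False))
                              (fun P => Phi s (rupd (decode re G s) kk n P))).
  have HPs : forall s, T s -> Phi s (rupd (decode re G s) kk n (Ps s)).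
  { intros s Hs. apply epsilon_spec. by apply H. }
  have HPsi : forall s s', (forall j, j < m -> s (2*j) = s' (2*j)) -> Ps s = Ps s'.
  { intros s s' Hj. rewrite /Ps. f_equal. apply functional_extensionality => P.
    apply propositional_extensionality. rewrite (decode_local (good_codes_local HG) Hj).
    exact: HPhi. }
  destruct (trivial_or_two M) as [Htriv|[a0 [a1 Ha01]]];
    [|exact: iex_rel_intro_code HG HPs HPsi (or_introl Ha01)].
  destruct (classic (forall s, T s -> forall b, Ps s b)) as [Hfull|Hnf].
  - exact: (iex_rel_intro_code (a0 := point M) (a1 := point M) HG HPs HPsi (or_intror Hfull)).
  - have [s0 [Hs0 [b0 Hb0]]] : exists s0, T s0 /\ exists b, ~ Ps s0 b.
    { apply NNPP => X. apply Hnf => s Hs b. apply NNPP => Y. apply X. eauto. }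
    left. apply (proj2 (Hpb (good_renv_upd_none kk n HG))). intros s Hs.
    rewrite (assignment_eq_trivial Htriv (proj1 HG s s0 Hs Hs0)).
    have -> : (fun _ : 'I_n -> M => False) = Ps s0.
    { apply functional_extensionality => b. apply propositional_extensionality.
      split; [tauto|]. intro Hp. apply Hb0.
      by rewrite (functional_extensionality b0 b (fun i => Htriv (b0 i) (b i))). }
    by apply HPs.
Qed.

Lemma id_sat_iex_rel (T : team M) :
  good re G m k T ->
  (id_sat T (iex_rel m k n pb pe) <->
   forall s, T s -> exists P, Phi s (rupd (decode re G s) kk n P)).
Proof. intro HG. split; [exact: iex_rel_elim|exact: iex_rel_intro]. Qed.

Lemma id_sat_iall_relE (T : team M) :
  id_sat T (iall_rel m k n pb pe) <->
  id_sat T pb /\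
  id_sat (team_dup (team_dups (team_dup T (2*m)) (argvars k n)) (valvar k))
         (IImp (dep_val L m k n) pe).
Proof. rewrite /iall_rel /= id_sat_ialls. tauto. Qed.

Lemma iall_rel_elim_code (T : team M) (P : ('I_n -> M) -> Prop) (a0 a1 : M) :
  good re G m k T -> id_sat T (iall_rel m k n pb pe) -> a0 <> a1 \/ (forall b, P b) ->
  forall s, T s -> Phi s (rupd (decode re G s) kk n P).
Proof.
  move=> HG /id_sat_iall_relE [_ Himp] C s Hs.
  set (Gn := fun (_ : assignment M) => rel_code P a0 a1).
  have HGn : code_local m Gn by [].
  set (Y := code_team T m k n (fun _ c => c = a0) Gn).
  have HGY : good (renv_upd re kk n (Some (m, k))) (codes_upd G m n Gn) (m+1) (k+n+1) Y.
  { by apply: good_code_team. }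
  have HYsub : forall s3, Y s3 -> team_dup (team_dups (team_dup T (2*m)) (argvars k n))
                                            (valvar k) s3.
  { intros s3 Hs3. apply iall_rel_team. destruct (code_team_even Hs3) as [s0 [Hs0 [Hx _]]].
    eauto. }
  have Hdz : id_sat Y (dep_val L m k n).
  { eapply id_sat_dep_val; [exact HGY| | |exact HGn].
    - by intros s3 [s0 [_ [_ [_ Hz]]]].
    - intros s3 [s0 [_ [[_ X2] _]]] i. apply X2. right; right; eauto. }
  have Hall := proj1 (Hpe HGn HGY) (Himp Y HYsub Hdz).
  destruct (code_team_over (Cs := fun _ c => c = a0) HG Hs erefl HGn) as [s3 [Hs3 Hj]].
  have := Hall s3 Hs3.
  have -> : (fun b => s3 (2*m) = Some (Gn s3 b)) = P.
  { destruct Hs3 as [s0 [_ [_ [[c [-> ->]] _]]]]. exact: rel_code_spec. }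
  exact: Phi_transfer (good_codes_local HG) Hj.
Qed.

Lemma iall_rel_elim (T : team M) :
  good re G m k T -> id_sat T (iall_rel m k n pb pe) ->
  forall s, T s -> forall P, Phi s (rupd (decode re G s) kk n P).
Proof.
  intros HG H s Hs P.
  destruct (trivial_or_two M) as [Htriv|[a0 [a1 Ha01]]];
    [|exact: iall_rel_elim_code HG H (or_introl Ha01) s Hs].
  destruct (classic (forall b, P b)) as [Hfull|Hnf].
  - exact: (iall_rel_elim_code (a0 := point M) (a1 := point M) HG H (or_intror Hfull)).
  - have [b0 Hb0] : exists b, ~ P b by apply NNPP => X; apply Hnf => b; apply NNPP; eauto.
    have -> : P = (fun _ => False).
    { apply functional_extensionality => b. apply propositional_extensionality.
      split; [|tauto]. intro Hp. apply Hb0.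
      by rewrite (functional_extensionality b0 b (fun i => Htriv (b0 i) (b i))). }
    move: H => /id_sat_iall_relE [Hpb1 _].
    exact: (proj1 (Hpb (good_renv_upd_none kk n HG)) Hpb1).
Qed.

Lemma iall_rel_intro (T : team M) :
  good re G m k T -> (forall s, T s -> forall P, Phi s (rupd (decode re G s) kk n P)) ->
  id_sat T (iall_rel m k n pb pe).
Proof.
  intros HG H. apply id_sat_iall_relE. split.
  - apply (proj2 (Hpb (good_renv_upd_none kk n HG))). intros s Hs. by apply H.
  - intros Y HY Hdz.
    set (Gn := code_of_team Y m k n).
    have HGn : code_local m Gn by move=> s s' Hj; apply code_of_team_local.
    have Hext : forall y, Y y -> exists s, T s /\ extends_fresh m k n s y.
    { intros y Hy. apply iall_rel_team. by apply HY. }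
    have HFn : forall y, Y y -> y (valvar k) = Some (Gn y (argvals k n y)).
    { intros y Hy. apply (dep_val_code_of_team Hdz); auto.
      - intros y' Hy' i. destruct (Hext y' Hy') as [s [_ [_ X2]]].
        apply X2. right; right; eauto.
      - destruct (Hext y Hy) as [s [_ [_ X2]]]. apply X2. right; left; auto. }
    set (Ys := code_team T m k n (fun _ _ => True) Gn).
    have HGY : good (renv_upd re kk n (Some (m, k))) (codes_upd G m n Gn) (m+1) (k+n+1) Ys.
    { by apply: good_code_team. }
    apply (id_sat_downward_closed (X := Ys)).
    + apply (proj2 (Hpe HGn HGY)). intros s3 Hs3.
      destruct (code_team_even Hs3) as [s [Hs [_ Hj]]].
      apply (Phi_transfer (good_codes_local HG) (s := s)); [intros j Hj'; symmetry; auto|].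
      by apply H.
    + intros y Hy. destruct (Hext y Hy) as [s [Hs [X1 X2]]]. exists s; split; auto.
      split; [split; auto|split; auto].
      destruct (y (2*m)) as [c|] eqn:Ec; [by exists c|].
      exfalso. apply (X2 (2*m)); auto. by left.
Qed.

Lemma id_sat_iall_rel (T : team M) :
  good re G m k T ->
  (id_sat T (iall_rel m k n pb pe) <->
   forall s, T s -> forall P, Phi s (rupd (decode re G s) kk n P)).
Proof. intro HG. split; [exact: iall_rel_elim|exact: iall_rel_intro]. Qed.

End RelQuant.

(** * Correctness *)

Lemma id_sat_iall_even (L : signature) (M : structure L) re (G : codes M) m k (T : team M)
    (body : id_formula L) (Psi : assignment M -> Prop) (Q : assignment M -> M -> Prop) :
  good re G m k T ->
  (forall T', good re G (m+1) k T' -> (id_sat T' body <-> forall s, T' s -> Psi s)) ->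
  (forall s a, T s -> (Psi (upd s (2*m) a) <-> Q s a)) ->
  (id_sat T (IAll (2*m) body) <-> forall s, T s -> forall a, Q s a).
Proof.
  intros HG Hb HQ. rewrite /= (Hb _ (good_team_dup HG)). split.
  - intros H s Hs a. apply HQ; auto. apply H. by exists s, a.
  - intros H s' [s [a [Hs ->]]]. apply HQ; auto.
Qed.

Lemma id_sat_iex_dep_even (L : signature) (M : structure L) re (G : codes M) m k (T : team M)
    (body : id_formula L) (Psi : assignment M -> Prop) (Q : assignment M -> M -> Prop) :
  good re G m k T ->
  (forall T', good re G (m+1) k T' -> (id_sat T' body <-> forall s, T' s -> Psi s)) ->
  (forall s a, T s -> (Psi (upd s (2*m) a) <-> Q s a)) ->
  (forall s s', (forall j, j < m -> s (2*j) = s' (2*j)) -> forall a, (Q s a <-> Q s' a)) ->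
  (id_sat T (iex_dep m body) <-> forall s, T s -> exists a, Q s a).
Proof.
  intros HG Hb HQ HQi. rewrite (id_sat_iex_dep m body (proj1 HG)). split.
  - intros [F [HF H0]]. have H := proj1 (Hb _ (good_team_supp HG HF)) H0.
    intros s Hs. exists (F s). apply HQ; auto. apply H. by exists s.
  - intro H. set (F := fun s => epsilon (inhabits (point M)) (fun a => Q s a)).
    have HF : forall s s', T s -> T s' -> (forall j, j < m -> s (2*j) = s' (2*j)) ->
                F s = F s'.
    { intros s s' _ _ Hj. rewrite /F. f_equal. apply functional_extensionality => a.
      apply propositional_extensionality. by apply HQi. }
    exists F. split; auto. apply (Hb _ (good_team_supp HG HF)).
    intros s' [s [Hs ->]]. apply HQ; auto. apply epsilon_spec. auto.
Qed.

Definition translate_ok (L : signature) (q : so_formula L) : Prop :=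
  forall pol sg re m k, fv_even sg q m ->
  forall (M : structure L) (G : codes M) (T : team M), good re G m k T ->
  (id_sat T (translate sg re m k pol q) <->
   forall s, T s -> polar pol (so_sat (acomp s sg) (decode re G s) q)).

Lemma forall_team_iff (L : signature) (M : structure L) (T : team M) (A B : assignment M -> Prop) :
  (forall s, T s -> (A s <-> B s)) ->
  ((forall s, T s -> A s) <-> (forall s, T s -> B s)).
Proof. intro H. split; intros H' s Hs; apply (H s Hs); auto. Qed.

Lemma translate_ok_atom (L : signature) (a : atom L) : translate_ok (SAtom a).
Proof.
  intros pol sg re m k HW M G T HG. destruct pol; cbn [translate].
  - apply forall_team_iff => s _. apply atom_sat_ren.
  - rewrite (flat_neg (flat_atom _) T). apply forall_team_iff => s _.
    by rewrite atom_sat_ren.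
Qed.

Lemma translate_ok_rvar (L : signature) kk n (ts : 'I_n -> term L) :
  translate_ok (SRVar kk ts).
Proof.
  intros pol sg re m k HW M G T HG. rewrite /=.
  destruct (re kk n) as [[m0 k0]|] eqn:Hre; [exact: id_sat_rvar_coded HG HW Hre|].
  have Hfalse : forall s, ~ so_sat (acomp s sg) (decode re G s) (SRVar kk ts).
  { intros s. rewrite /= /decode Hre. by intros [vs [_ []]]. }
  destruct pol; rewrite /=.
  - split; [intros H s Hs; exfalso; exact: (H s Hs)|].
    intros H s Hs. exact: Hfalse (H s Hs).
  - split; [intros _ s _; exact: Hfalse|]. intros _ Y _ HY. exact: HY.
Qed.

Lemma translate_ok_neg (L : signature) (p : so_formula L) :
  translate_ok p -> translate_ok (SNeg p).
Proof.
  intros IH pol sg re m k HW M G T HG. rewrite /= (IH (negb pol) sg re m k HW M G T HG).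
  apply forall_team_iff => s _. destruct pol; rewrite /=; [tauto|split; [tauto|apply NNPP]].
Qed.

Section Binary.

Variables (L : signature) (p r : so_formula L).
Hypotheses (IHp : translate_ok p) (IHr : translate_ok r).
Variables (sg : nat -> nat) (re : renv) (m k : nat) (M : structure L) (G : codes M).
Hypotheses (HWp : fv_even sg p m) (HWr : fv_even sg r m).

Let sem (b : bool) (q : so_formula L) (s : assignment M) :=
  polar b (so_sat (acomp s sg) (decode re G s) q).

Lemma translate_iand (T : team M) bp br :
  good re G m k T ->
  (id_sat T (IAnd (translate sg re m k bp p) (translate sg re m k br r)) <->
   forall s, T s -> sem bp p s /\ sem br r s).
Proof.
  intro HG. rewrite /sem /= (IHp bp HWp HG) (IHr br HWr HG).
  split; [intros [H1 H2] s Hs; split; auto|intro H; split; intros s Hs; apply H; auto].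
Qed.

Lemma translate_ior_cl (T : team M) bp br :
  good re G m k T ->
  (id_sat T (ior_cl m (translate sg re m k bp p) (translate sg re m k br r)
                      (translate sg re (m+2) k bp p) (translate sg re (m+2) k br r)) <->
   forall s, T s -> sem bp p s \/ sem br r s).
Proof.
  intro HG. have HE := good_codes_local HG.
  apply (id_sat_ior_cl (re := re) (G := G) (k := k)); auto.
  - intros T' HG'. exact: IHp.
  - intros T' HG'. exact: IHr.
  - intros T' HG'. apply IHp; auto. apply: fv_even_mono HWp _. lia.
  - intros T' HG'. apply IHr; auto. apply: fv_even_mono HWr _. lia.
  - intros s s' Hj. apply polar_iff. exact: so_sat_decode_local HWp HE Hj.
  - intros s s' Hj. apply polar_iff. exact: so_sat_decode_local HWr HE Hj.
Qed.

End Binary.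

Lemma fv_even_l (L : signature) sg (p r : so_formula L) m :
  (forall y, so_free p y \/ so_free r y -> exists j, j < m /\ sg y = 2*j) -> fv_even sg p m.
Proof. move=> HW y Hy. apply HW; by left. Qed.

Lemma fv_even_r (L : signature) sg (p r : so_formula L) m :
  (forall y, so_free p y \/ so_free r y -> exists j, j < m /\ sg y = 2*j) -> fv_even sg r m.
Proof. move=> HW y Hy. apply HW; by right. Qed.

Lemma translate_ok_and (L : signature) (p r : so_formula L) :
  translate_ok p -> translate_ok r -> translate_ok (SAnd p r).
Proof.
  intros IHp IHr pol sg re m k HW M G T HG.
  have HWp := fv_even_l HW. have HWr := fv_even_r HW.
  destruct pol; cbn [translate].
  - rewrite (translate_iand IHp IHr HWp HWr true true HG). by apply forall_team_iff.
  - rewrite (translate_ior_cl IHp IHr HWp HWr false false HG).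
    apply forall_team_iff => s _ /=. split; [tauto|apply not_and_or].
Qed.

Lemma translate_ok_or (L : signature) (p r : so_formula L) :
  translate_ok p -> translate_ok r -> translate_ok (SOr p r).
Proof.
  intros IHp IHr pol sg re m k HW M G T HG.
  have HWp := fv_even_l HW. have HWr := fv_even_r HW.
  destruct pol; cbn [translate].
  - rewrite (translate_ior_cl IHp IHr HWp HWr true true HG). by apply forall_team_iff.
  - rewrite (translate_iand IHp IHr HWp HWr false false HG).
    apply forall_team_iff => s _ /=. tauto.
Qed.

Lemma translate_ok_imp (L : signature) (p r : so_formula L) :
  translate_ok p -> translate_ok r -> translate_ok (SImp p r).
Proof.
  intros IHp IHr pol sg re m k HW M G T HG.
  have HWp := fv_even_l HW. have HWr := fv_even_r HW.
  destruct pol; cbn [translate].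
  - rewrite (translate_ior_cl IHp IHr HWp HWr false true HG).
    apply forall_team_iff => s _ /=. split; [tauto|apply imply_to_or].
  - rewrite (translate_iand IHp IHr HWp HWr true false HG).
    apply forall_team_iff => s _ /=. split; [tauto|]. intro H. split; [|tauto].
    apply NNPP. tauto.
Qed.

Section FOQuant.

Variables (L : signature) (x : nat) (p : so_formula L).
Hypothesis IH : translate_ok p.
Variables (sg : nat -> nat) (re : renv) (m k : nat) (M : structure L) (G : codes M).
Variable (T : team M).
Hypotheses (HW : fv_even sg (SAll x p) m) (HG : good re G m k T).

Let sg' := ren_upd sg x (2*m).
Let Q (pl : bool) (s : assignment M) (a : M) :=
  polar pl (so_sat (upd (acomp s sg) x a) (decode re G s) p).

Lemma fv_even_ren_upd : fv_even sg' p (m+1).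
Proof.
  intros y Hy. rewrite /sg' /ren_upd. destruct (Nat.eqb_spec y x) as [E|E].
  - exists m; split; auto; lia.
  - destruct (HW (conj E Hy)) as [j [Hj Ej]]. exists j; split; [lia|auto].
Qed.

Lemma quant_body_upd pl s a :
  polar pl (so_sat (acomp (upd s (2*m) a) sg') (decode re G (upd s (2*m) a)) p) <-> Q pl s a.
Proof.
  apply polar_iff.
  rewrite (@decode_local _ _ re G m (upd s (2*m) a) s (good_codes_local HG));
    [|intros j Hj; rewrite upd_neq; auto; lia].
  apply so_sat_ext. intros y Hy. rewrite /acomp /sg' /ren_upd.
  destruct (Nat.eqb_spec y x) as [->|E]; [by rewrite !upd_eq|].
  rewrite (upd_neq _ _ E). destruct (HW (conj E Hy)) as [j [Hj ->]].
  rewrite upd_neq; [auto|lia].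
Qed.

Lemma quant_body_local pl s s' :
  (forall j, j < m -> s (2*j) = s' (2*j)) -> forall a, (Q pl s a <-> Q pl s' a).
Proof.
  intros Hj a. apply polar_iff. rewrite (decode_local (good_codes_local HG) Hj).
  apply so_sat_ext. intros y Hy. destruct (Nat.eq_dec y x) as [->|E]; [by rewrite !upd_eq|].
  rewrite !(upd_neq _ _ E). destruct (HW (conj E Hy)) as [j [Hj' Ej]].
  by rewrite /acomp Ej Hj.
Qed.

Lemma translate_iall_body pl :
  id_sat T (IAll (2*m) (translate sg' re (m+1) k pl p)) <->
  forall s, T s -> forall a, Q pl s a.
Proof.
  apply (id_sat_iall_even HG (fun T' HG' => IH pl fv_even_ren_upd HG')).
  intros s a _. exact: quant_body_upd.
Qed.

Lemma translate_iex_body pl :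
  id_sat T (iex_dep m (translate sg' re (m+1) k pl p)) <->
  forall s, T s -> exists a, Q pl s a.
Proof.
  apply (id_sat_iex_dep_even HG (fun T' HG' => IH pl fv_even_ren_upd HG')).
  - intros s a _. exact: quant_body_upd.
  - exact: quant_body_local.
Qed.

End FOQuant.

Lemma translate_ok_all (L : signature) x (p : so_formula L) :
  translate_ok p -> translate_ok (SAll x p).
Proof.
  intros IH pol sg re m k HW M G T HG. destruct pol; cbn [translate].
  - rewrite (translate_iall_body IH HW HG). by apply forall_team_iff.
  - rewrite (translate_iex_body IH HW HG). apply forall_team_iff => s _ /=.
    split; [intros [a Ha] X; exact: Ha (X a)|apply not_all_ex_not].
Qed.

Lemma translate_ok_ex (L : signature) x (p : so_formula L) :
  translate_ok p -> translate_ok (SEx x p).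
Proof.
  intros IH pol sg re m k HW M G T HG. destruct pol; cbn [translate].
  - rewrite (translate_iex_body IH HW HG). by apply forall_team_iff.
  - rewrite (translate_iall_body IH HW HG). apply forall_team_iff => s _ /=.
    split; [intros H [a Ha]; exact: H a Ha|intros H a Ha; apply H; eauto].
Qed.

Section SOQuant.

Variables (L : signature) (kk n : nat) (p : so_formula L).
Hypothesis IH : translate_ok p.
Variables (sg : nat -> nat) (re : renv) (m k : nat) (M : structure L) (G : codes M).
Hypothesis HW : fv_even sg p m.

Let Phi (pol : bool) (s : assignment M) (rho : rel_env M) :=
  polar pol (so_sat (acomp s sg) rho p).

Lemma Phi_local pol s s' rho :
  (forall j, j < m -> s (2*j) = s' (2*j)) -> (Phi pol s rho <-> Phi pol s' rho).
Proof.
  intros Hj. apply polar_iff. apply so_sat_ext. intros y Hy.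
  destruct (HW Hy) as [j [Hj' E]]. by rewrite /acomp E Hj.
Qed.

Lemma translate_body_empty pol T :
  good (renv_upd re kk n None) G m k T ->
  (id_sat T (translate sg (renv_upd re kk n None) m k pol p) <->
   forall s, T s -> Phi pol s (rupd (decode re G s) kk n (fun _ => False))).
Proof.
  intros HG'. rewrite (IH pol HW HG'). apply forall_team_iff => s _.
  by rewrite decode_upd_none.
Qed.

Lemma translate_body_coded pol (Gn : assignment M -> ('I_n -> M) -> M) T :
  codes_local re G m -> code_local m Gn ->
  good (renv_upd re kk n (Some (m, k))) (codes_upd G m n Gn) (m+1) (k+n+1) T ->
  (id_sat T (translate sg (renv_upd re kk n (Some (m, k))) (m+1) (k+n+1) pol p) <->
   forall s, T s -> Phi pol s (rupd (decode re G s) kk n (fun b => s (2*m) = Some (Gn s b)))).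
Proof.
  intros HE _ HG'. rewrite (IH pol (fv_even_mono HW (leq_addr 1 m)) HG').
  apply forall_team_iff => s _. rewrite decode_upd_some //.
  intros kk' n' m0 k0 E. exact: (proj1 (HE _ _ _ _ E)).
Qed.

Lemma translate_iall_rel pol T :
  good re G m k T ->
  (id_sat T (iall_rel m k n (translate sg (renv_upd re kk n None) m k pol p)
               (translate sg (renv_upd re kk n (Some (m, k))) (m+1) (k+n+1) pol p)) <->
   forall s, T s -> forall P, Phi pol s (rupd (decode re G s) kk n P)).
Proof.
  intro HG. apply: (id_sat_iall_rel (translate_body_empty pol) _ (@Phi_local pol) HG).
  move=> Gn T'. exact: translate_body_coded (good_codes_local HG).
Qed.

Lemma translate_iex_rel pol T :
  good re G m k T ->
  (id_sat T (iex_rel m k n (translate sg (renv_upd re kk n None) m k pol p)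
               (translate sg (renv_upd re kk n (Some (m, k))) (m+1) (k+n+1) pol p)) <->
   forall s, T s -> exists P, Phi pol s (rupd (decode re G s) kk n P)).
Proof.
  intro HG. apply: (id_sat_iex_rel (translate_body_empty pol) _ (@Phi_local pol) HG).
  move=> Gn T'. exact: translate_body_coded (good_codes_local HG).
Qed.

End SOQuant.

Lemma translate_ok_allR (L : signature) kk n (p : so_formula L) :
  translate_ok p -> translate_ok (SAllR kk n p).
Proof.
  intros IH pol sg re m k HW M G T HG. destruct pol; cbn [translate]; cbv zeta.
  - rewrite (translate_iall_rel kk n IH HW true HG). by apply forall_team_iff.
  - rewrite (translate_iex_rel kk n IH HW false HG). apply forall_team_iff => s _ /=.
    split; [intros [P HP] X; exact: HP (X P)|apply not_all_ex_not].
Qed.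

Lemma translate_ok_exR (L : signature) kk n (p : so_formula L) :
  translate_ok p -> translate_ok (SExR kk n p).
Proof.
  intros IH pol sg re m k HW M G T HG. destruct pol; cbn [translate]; cbv zeta.
  - rewrite (translate_iex_rel kk n IH HW true HG). by apply forall_team_iff.
  - rewrite (translate_iall_rel kk n IH HW false HG). apply forall_team_iff => s _ /=.
    split; [intros H [P HP]; exact: H P HP|intros H P HP; apply H; eauto].
Qed.

Lemma translate_correct (L : signature) (q : so_formula L) : translate_ok q.
Proof.
  induction q.
  - exact: translate_ok_atom.
  - exact: translate_ok_rvar.
  - exact: translate_ok_neg.
  - exact: translate_ok_and.
  - exact: translate_ok_or.
  - exact: translate_ok_imp.
  - exact: translate_ok_all.
  - exact: translate_ok_ex.
  - exact: translate_ok_allR.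
  - exact: translate_ok_exR.
Qed.

(** * Free variables of the translation *)

Lemma iands_free (L : signature) (l : list (id_formula L)) y :
  id_free (iands l) y -> exists p, List.In p l /\ id_free p y.
Proof.
  elim: l => [|a l IH] /=; [by case; case|].
  move=> [H|/IH [p [H1 H2]]]; eauto.
Qed.

Lemma dep_on_free (L : signature) l x y : id_free (dep_on L l x) y -> List.In y l \/ y = x.
Proof.
  move=> /= [/iands_free [p [/List.in_map_iff [v [<- Hv]] /term_var_inv ->]]|/term_var_inv];
    auto.
Qed.

Lemma ialls_free (L : signature) l (p : id_formula L) y :
  id_free (ialls l p) y -> id_free p y /\ ~ List.In y l.
Proof.
  elim: l => [|v l IH] /=; [tauto|]. move=> [Hne /IH [H3 H4]].
  split; auto. by move=> [E|E]; [subst|].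
Qed.

Lemma veq_free (L : signature) u w y : id_free (veq L u w) y -> y = u \/ y = w.
Proof. by move=> /= [/term_var_inv|/term_var_inv]; auto. Qed.

Lemma iex_dep_free (L : signature) m (p : id_formula L) y :
  id_free (iex_dep m p) y -> (exists j, j < m /\ y = 2*j) \/ (id_free p y /\ y <> 2*m).
Proof.
  intros [Hne [H|H]]; [|by right].
  destruct (dep_on_free H) as [Hin|E]; [left; exact/in_evens|contradiction].
Qed.

Definition fv_ok (L : signature) m k sg (q : so_formula L) y :=
  (exists j, j < m /\ y = 2*j) \/ (exists j, j < k /\ y = 2*j+1) \/
  (exists x, so_free q x /\ y = sg x).

Lemma fv_ok_sub (L : signature) m m' k k' sg (p q : so_formula L) y :
  m <= m' -> k <= k' -> (forall x, so_free p x -> so_free q x) ->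
  fv_ok m k sg p y -> fv_ok m' k' sg q y.
Proof.
  intros Hm Hk Hpq [[j [Hj E]]|[[j [Hj E]]|[x [Hx E]]]].
  - left; exists j; split; auto; lia.
  - right; left; exists j; split; auto; lia.
  - right; right; exists x; auto.
Qed.

(* The variables 2m, 2(m+1) chosen by [ior_cl] are bound again. *)
Lemma fv_ok_drop2 (L : signature) m k sg (p q : so_formula L) y :
  (forall x, so_free p x -> so_free q x) -> y <> 2*m -> y <> 2*(m+1) ->
  fv_ok (m+2) k sg p y -> fv_ok m k sg q y.
Proof.
  intros Hpq Hne1 Hne2 [[j [Hj E]]|Hy]; [|exact: (fv_ok_sub (p := p) (m := m)) (or_intror Hy)].
  left. exists j. split; auto. have : j <> m /\ j <> m+1 by split; intros ->. lia.
Qed.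

Lemma ior_cl_fv_ok (L : signature) m k sg (p r : so_formula L) (p0 q0 p2 q2 : id_formula L) y :
  (id_free p0 y -> fv_ok m k sg p y) -> (id_free q0 y -> fv_ok m k sg r y) ->
  (id_free p2 y -> fv_ok (m+2) k sg p y) -> (id_free q2 y -> fv_ok (m+2) k sg r y) ->
  id_free (ior_cl m p0 q0 p2 q2) y -> fv_ok m k sg p y \/ fv_ok m k sg r y.
Proof.
  intros Hp0 Hq0 Hp2 Hq2 [[H|H]|H]; [left; exact: Hp0|right; exact: Hq0|].
  destruct (iex_dep_free H) as [Hj|[H1 Hne1]]; [by left; left|].
  destruct (iex_dep_free H1) as [[j [Hj E]]|[H2 Hne2]].
  - left; left. exists j. split; auto. lia.
  - destruct H2 as [[H3|H3]|[H3|H3]].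
    + destruct (veq_free H3); contradiction.
    + left. exact: fv_ok_drop2 (Hp2 H3).
    + destruct H3 as [H3|[]]. destruct (veq_free H3); contradiction.
    + right. exact: fv_ok_drop2 (Hq2 H3).
Qed.

Definition renv_bounded (re : renv) m k :=
  forall kk n m0 k0, re kk n = Some (m0,k0) -> m0 < m /\ k0 + n + 1 <= k.

Lemma renv_bounded_mono re m k m' k' :
  renv_bounded re m k -> m <= m' -> k <= k' -> renv_bounded re m' k'.
Proof. intros H H1 H2 a b c d E. destruct (H _ _ _ _ E). split; lia. Qed.

Lemma renv_bounded_none re m k kk n :
  renv_bounded re m k -> renv_bounded (renv_upd re kk n None) m k.
Proof.
  intros H a b c d. rewrite /renv_upd.
  destruct (Nat.eqb a kk); [destruct (Nat.eqb b n)|]; try discriminate; eauto.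
Qed.

Lemma renv_bounded_some re m k kk n :
  renv_bounded re m k -> renv_bounded (renv_upd re kk n (Some (m,k))) (m+1) (k+n+1).
Proof.
  intros H a b c d. rewrite /renv_upd.
  destruct (Nat.eqb a kk); [destruct (Nat.eqb_spec b n) as [->|_]|].
  - case=> <- <-. split; lia.
  - move=> /H. lia.
  - move=> /H. lia.
Qed.

Lemma fv_ok_quant (L : signature) m k sg x (p q : so_formula L) y :
  (forall x', x' <> x -> so_free p x' -> so_free q x') ->
  y <> 2*m -> fv_ok (m+1) k (ren_upd sg x (2*m)) p y -> fv_ok m k sg q y.
Proof.
  intros Hq Hne [[j [Hj E]]|[H|[x' [Hx E]]]]; [|by right; left|].
  - left. exists j. split; auto. have : j <> m by intros ->. lia.
  - move: E. rewrite /ren_upd. destruct (Nat.eqb_spec x' x) as [->|E2]; [contradiction|].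
    right; right. exists x'; split; auto.
Qed.

Lemma dep_val_free (L : signature) m k n y :
  id_free (dep_val L m k n) y ->
  (exists j, j < m + 1 /\ y = 2*j) \/ List.In y (argvars k n) \/ y = valvar k.
Proof.
  move=> /dep_on_free [H|]; auto. destruct (List.in_app_or _ _ _ H) as [H'|]; auto.
  left. exact/in_evens.
Qed.

Lemma rel_fv_ok (L : signature) m k n sg (p q : so_formula L) (pb pe : id_formula L) y :
  (forall x, so_free p x -> so_free q x) ->
  (id_free pb y -> fv_ok m k sg p y) ->
  (id_free pe y -> fv_ok (m+1) (k+n+1) sg p y) ->
  id_free (iall_rel m k n pb pe) y \/ id_free (iex_rel m k n pb pe) y -> fv_ok m k sg q y.
Proof.
  intros Hq Hb He H.
  have [Hpb|[[j [Hj E]]|[Hm [Hz [Hy H']]]]] :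
    id_free pb y \/ (exists j, j < m /\ y = 2*j) \/
    (y <> 2*m /\ y <> valvar k /\ ~ List.In y (argvars k n) /\
     (id_free (dep_val L m k n) y \/ id_free pe y)).
  { destruct H as [[H|[Hne H]]|[H|H]]; auto.
    - move: H => /ialls_free [[Hz H] Hy]. right; right. tauto.
    - move: H => /iex_dep_free [H|[/ialls_free [[Hz H] Hy] Hne]]; auto.
      right; right. tauto. }
  - exact: fv_ok_sub (Hb Hpb).
  - left. by exists j.
  - have Hlow : forall j, j < m + 1 -> y = 2*j -> fv_ok m k sg q y.
    { intros j Hj ->. left. exists j. split; auto. have : j <> m by intros ->. lia. }
    destruct H' as [H'|H'].
    + move: H' => /dep_val_free [[j [Hj E]]|[H'|H']]; [exact: Hlow E|contradiction|contradiction].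
    + destruct (He H') as [[j [Hj E]]|[[j [Hj E]]|Hx]]; [exact: Hlow E| |].
      * right; left. exists j. split; auto. subst y.
        have Hjk : ~ (k <= j).
        { intro Hkj. destruct (Nat.eq_dec j k) as [->|Ejk]; [by apply Hz; rewrite /valvar; lia|].
          apply Hy, in_argvars. have Hi : j - k - 1 < n by lia.
          exists (Ordinal Hi). rewrite /argvar /=. lia. }
        lia.
      * exact: (fv_ok_sub (m := m) (k := k) (p := p)) (or_intror (or_intror Hx)).
Qed.

Lemma iand_fv_ok (L : signature) m k sg (p r : so_formula L) (a b : id_formula L) y :
  (id_free a y -> fv_ok m k sg p y) -> (id_free b y -> fv_ok m k sg r y) ->
  id_free (IAnd a b) y -> fv_ok m k sg p y \/ fv_ok m k sg r y.
Proof. intros Ha Hb [H|H]; [left; exact: Ha|right; exact: Hb]. Qed.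

Lemma rvar_fv_ok (L : signature) pol sg re m k kk n (ts : 'I_n -> term L) y :
  renv_bounded re m k -> id_free (translate sg re m k pol (SRVar kk ts)) y ->
  fv_ok m k sg (SRVar kk ts) y.
Proof.
  intros Hre Hf. cbn [translate] in Hf.
  destruct (re kk n) as [[m0 k0]|] eqn:E; [|by destruct pol; simpl in Hf; tauto].
  destruct (Hre _ _ _ _ E) as [H1 H2].
  have [Hf'|Hf'] : id_free (args_eq sg k0 ts) y \/ id_free (veq L (valvar k0) (2*m0)) y.
  { destruct pol; simpl in Hf |- *; tauto. }
  - move: Hf' => /iands_free [p [/List.in_map_iff [i [<- _]] [Hg|Hg]]].
    + apply term_var_inv in Hg. subst y. right; left. exists (k0 + 1 + i).
      have := ltn_ord i. split; [lia|rewrite /argvar; lia].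
    + apply term_var_ren in Hg. destruct Hg as [x [Hx ->]]. right; right.
      exists x; split; auto. by exists i.
  - destruct (veq_free Hf') as [->| ->].
    + right; left. exists k0; split; [lia|rewrite /valvar; lia].
    + left. by exists m0.
Qed.

Lemma translate_fv_ok (L : signature) (q : so_formula L) :
  forall pol sg re m k y, renv_bounded re m k ->
  id_free (translate sg re m k pol q) y -> fv_ok m k sg q y.
Proof.
  induction q as [a|kk n ts|p IH|p IHp r IHr|p IHp r IHr|p IHp r IHr|x p IH|x p IH
                 |kk n p IH|kk n p IH];
    intros pol sg re m k y Hre Hf.
  4-10: cbn [translate] in Hf.
  4-6: have Hre2 : renv_bounded re (m+2) k by apply: renv_bounded_mono Hre _ _; lia.
  4-6: have Hpr : fv_ok m k sg p y \/ fv_ok m k sg r y by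
         destruct pol; first
           [ exact: iand_fv_ok (IHp _ _ _ _ _ _ Hre) (IHr _ _ _ _ _ _ Hre) Hf
           | exact: ior_cl_fv_ok (IHp _ _ _ _ _ _ Hre) (IHr _ _ _ _ _ _ Hre)
                                 (IHp _ _ _ _ _ _ Hre2) (IHr _ _ _ _ _ _ Hre2) Hf ].
  4-6: by case: Hpr => Hpr; apply: (fv_ok_sub _ _ _ Hpr) => // x Hx; [left|right].
  4-5: have Hre1 : renv_bounded re (m+1) k by apply: renv_bounded_mono Hre _ _; lia.
  - have Hf' : id_free (IAtom (aren sg a)) y by destruct pol; simpl in *; tauto.
    move: Hf' => /atom_var_ren [x [Hx ->]]. right; right; eauto.
  - exact: rvar_fv_ok Hf.
  - exact: IH Hf.
  - have Hq : forall x', x' <> x -> so_free p x' -> so_free (SAll x p) x' by [].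
    destruct pol; [destruct Hf as [Hne Hf]|move: Hf => /iex_dep_free [H|[Hf Hne]]; [by left|]];
      exact: fv_ok_quant Hq Hne (IH _ _ _ _ _ _ Hre1 Hf).
  - have Hq : forall x', x' <> x -> so_free p x' -> so_free (SEx x p) x' by [].
    destruct pol; [move: Hf => /iex_dep_free [H|[Hf Hne]]; [by left|]|destruct Hf as [Hne Hf]];
      exact: fv_ok_quant Hq Hne (IH _ _ _ _ _ _ Hre1 Hf).
  - have Hb := IH pol sg _ m k y (renv_bounded_none (kk := kk) (n := n) Hre).
    have He := IH pol sg _ (m+1) (k+n+1) y (renv_bounded_some (kk := kk) (n := n) Hre).
    apply: (rel_fv_ok (q := SAllR kk n p) (fun _ H => H) Hb He).
    destruct pol; cbv zeta in Hf; tauto.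
  - have Hb := IH pol sg _ m k y (renv_bounded_none (kk := kk) (n := n) Hre).
    have He := IH pol sg _ (m+1) (k+n+1) y (renv_bounded_some (kk := kk) (n := n) Hre).
    apply: (rel_fv_ok (q := SExR kk n p) (fun _ H => H) Hb He).
    destruct pol; cbv zeta in Hf; tauto.
Qed.

Lemma good_empty_team (L : signature) (M : structure L) (G : codes M) :
  good (fun _ _ => None) G 0 0 (fun s => s = empty_assignment M).
Proof.
  split; [|split; [|split]].
  - by move=> s s' -> ->.
  - by move=> s -> j.
  - move=> s _ j Hj. lia.
  - by [].
Qed.

Theorem theorem5p8 (L : signature) (psi : so_formula L) :
  so_sentence psi ->
  exists phi : id_formula L,
    id_sentence phi /\
    (forall M : structure L, so_true M psi <-> id_true M phi).
Proof.
  intros [Hfv _].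
  have HW : fv_even (fun _ => 0) psi 0 by move=> y /Hfv.
  exists (translate (fun _ => 0) (fun _ _ => None) 0 0 true psi). split.
  - intros y Hy. have Hre : renv_bounded (fun _ _ => None) 0 0 by [].
    destruct (translate_fv_ok Hre Hy) as [[j [Hj _]]|[[j [Hj _]]|[x [Hx _]]]];
      [lia|lia|exact: Hfv Hx].
  - intro M. rewrite /id_true (@translate_correct _ psi true _ _ _ _ HW M _ _
                                 (good_empty_team (fun _ n _ _ => point M))).
    split; [by move=> H s ->|move=> H; exact: (H _ erefl)].
Qed.
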